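(* Let $N\ge1$, $\omega_1,\dots,\omega_N\in\mathbb{R}$, $\kappa\in\mathbb{R}$, $(\theta_i^0)\in\mathbb{R}^N$, and let $\Theta(t)=(\theta_i(t))$ solve \[ \dot\theta_i=\omega_i-\frac{\kappa}{N}\sum_{j=1}^N(1+\cos\theta_j)\sin\theta_i,\qquad\theta_i(0)=\theta_i^0, \] with $R(t)=\frac1N\sum_j(1+\cos\theta_j(t))$ and $R_0=R(0)$. Let $\|\Omega\|_\infty=\max_i|\omega_i|$. Suppose $R_0>0$, fix $\mu\in(0,\min\{R_0,1\})$ and suppose \[ \kappa>\frac{\|\Omega\|_\infty}{(R_0-\mu)\sqrt{\mu(2-\mu)}}. \] Set $\tau=\frac{\pi}{\kappa(R_0-\mu)\sqrt{\mu(2-\mu)}-\|\Omega\|_\infty}$ and $\lambda=\kappa(R_0-\mu)(1-\mu)$. Then: (a) $R(t)\ge R_0-\mu$ for all $t\ge0$; (b) for all $i$, $\lim_{t\to\infty}\theta_i(t)$ exists, $\sup_{t\ge0}\theta_i(t)-\inf_{t\ge0}\theta_i(t)<2\pi$ and $\lim_{t\to\infty}\dot\theta_i(t)=0$; (c) for any $i$ and $t_0\ge0$ with $\cos\theta_i(t_0)\ge-1+\mu$, we have $\cos\theta_i(t)\ge-1+\mu$ for $t\ge t_0$ and $\cos\theta_i(t)\ge1-\mu$ for $t\ge t_0+\tau$; (d) for any $i$, either $\sup_{t\ge0}\cos\theta_i(t)<-1+\mu$, in which case $\lim_{t\to\infty}\theta_i(t)=\pi-\sin^{-1}\frac{\omega_i}{\kappa\lim_{t\to\infty}R(t)}\pmod{2\pi}$,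 or $\sup_{t\ge0}\cos\theta_i(t)\ge-1+\mu$, in which case $\lim_{t\to\infty}\theta_i(t)=\sin^{-1}\frac{\omega_i}{\kappa\lim_{t\to\infty}R(t)}\pmod{2\pi}$; (e) for fixed $i,j$, suppose there is $t_0\ge0$ with $\cos\theta_i(t_0)\ge-1+\mu$ and $\cos\theta_j(t_0)\ge-1+\mu$. If $\omega_i>\omega_j$, then after translations by multiples of $2\pi$, \[ \theta_i(t)-\theta_j(t)\le\frac{\omega_i-\omega_j}{\lambda}+\pi e^{-\lambda(t-t_0-\tau)}\quad\text{for }t\ge t_0+\tau, \] \[ \theta_i(t)-\theta_j(t)\ge\frac{\omega_i-\omega_j}{2\kappa}-\frac{\omega_i-\omega_j}{2\kappa}e^{-2\kappa\left(t-t_0-\tau-\frac{\pi}{\omega_i-\omega_j}\right)}\quad\text{for }t\ge t_0+\tau+\frac{\pi}{\omega_i-\omega_j}; \] if $\omega_i=\omega_j$, then after translations by multiples of $2\pi$, $|\theta_i(t)-\theta_j(t)|\le\pi e^{-\lambda(t-t_0-\tau)}$ for $t\ge t_0+\tau$ (so $\theta_i-\theta_j\to0$). *)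

From Stdlib Require Import Reals Lra ZArith.
From Coquelicot Require Import Coquelicot.
Open Scope R_scope.

Fixpoint sumN (N : nat) (f : nat -> R) : R :=
  match N with
  | O => 0
  | S n => sumN n f + f n
  end.

(* maxN N f = max_{i<N} f i  (0 for N = 0; only used with N >= 1 and f >= 0) *)
Fixpoint maxN (N : nat) (f : nat -> R) : R :=
  match N with
  | O => 0
  | S O => f O
  | S n => Rmax (maxN n f) (f n)
  end.

Definition Omega_inf (N : nat) (omega : nat -> R) : R :=
  maxN N (fun i => Rabs (omega i)).

Definition order_param (N : nat) (theta : nat -> R -> R) (t : R) : R :=
  / INR N * sumN N (fun j => 1 + cos (theta j t)).

Definition is_solution (N : nat) (omega : nat -> R) (kappa : R)
    (theta0 : nat -> R) (theta : nat -> R -> R) : Prop :=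
  (forall i, (i < N)%nat -> theta i 0 = theta0 i) /\
  (forall i t, (i < N)%nat -> 0 <= t ->
     is_derive (theta i) t
       (omega i - kappa / INR N * sumN N (fun j => 1 + cos (theta j t))
                   * sin (theta i t))).

(* Write [s = sqrt (mu (2 - mu))], the least [|sin|] on the band [|cos| <= 1 - mu].  While
   [R >= R0 - mu] we have [kappa R s > ||Omega||], so inside the band [cos theta_i] increases:
   oscillators never leave the band and each term [1 + cos theta_j] of [R] loses at most [mu],
   which keeps [R >= R0 - mu] forever (a).  In the band [theta_i] crosses a half-period at speed
   at least [kappa (R0 - mu) s - ||Omega||], so within [tau] it reaches [cos >= 1 - mu] (c); there
   [sin] has slope in [[1 - mu, 1]], and comparison with linear ODEs gives the exponential phase
   estimates (e).  The system is the gradient flow of [- sum omega_i theta_i - kappa N R^2 / 2],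
   which is bounded below because each [theta_i] oscillates by less than [2 PI] (b); hence
   [theta_i' -> 0].  If [R] did not converge, every level between its liminf and limsup would solve
   [r = 1 + (1/N) sum eps_i sqrt (1 - (omega_i / (kappa r))^2)] with signs [eps_i = +-1]; this is
   impossible, since no finite combination [sum_k c_k sqrt (v - a_k)] equals [N v] on an interval.
   Hence [R] converges and [theta_i] tends to the arcsine branch selected by its band (d). *)

From Stdlib Require Import Reals Lra Lia ZArith Classical List.
From Coquelicot Require Import Coquelicot.
Open Scope R_scope.

(** * Level crossings and differential inequalities *)

Lemma continuity_pt_eps f x : continuity_pt f x ->
  forall eps, 0 < eps ->
  exists del, 0 < del /\ forall y, Rabs (y - x) < del -> Rabs (f y - f x) < eps.
Proof.
  intros Hc eps Heps. destruct (Hc eps Heps) as [d [Hd H]].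
  exists d; split; [exact Hd|]. intros y Hy.
  destruct (Req_dec y x) as [->|Hne].
  - rewrite Rminus_diag, Rabs_R0; lra.
  - apply (H y). repeat split; auto.
Qed.

Lemma is_derive_continuity_pt f x l : is_derive f x l -> continuity_pt f x.
Proof.
  intros H. apply is_derive_Reals in H.
  apply derivable_continuous_pt. exists l; exact H.
Qed.

Lemma last_level_crossing (f : R -> R) a b M : a <= b ->
  (forall t, a <= t <= b -> continuity_pt f t) ->
  f a <= M -> M < f b ->
  exists c, a <= c < b /\ f c = M /\ forall t, c < t <= b -> M < f t.
Proof.
  intros Hab Hc Ha Hb.
  set (E := fun t => a <= t <= b /\ f t <= M).
  destruct (completeness E) as [c [Hub Hlub]].
  { exists b; intros t [Ht _]; lra. }
  { exists a; split; [lra | exact Ha]. }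
  assert (Hac : a <= c) by (apply Hub; split; [lra | exact Ha]).
  assert (Hcb : c <= b) by (apply Hlub; intros t [Ht _]; lra).
  assert (Hafter : forall t, c < t <= b -> M < f t).
  { intros t Ht. apply Rnot_le_lt; intros Hft.
    assert (t <= c) by (apply Hub; split; [lra | exact Hft]). lra. }
  (* [f c <= M]: otherwise [f > M] on a left neighbourhood of [c], contradicting [c = sup E]. *)
  assert (Hfc : f c <= M).
  { apply Rnot_lt_le; intros Hlt.
    destruct (continuity_pt_eps f c (Hc c (conj Hac Hcb)) (f c - M)) as [e [He Hne]]; [lra|].
    assert (Hx : exists x, E x /\ c - e < x).
    { apply NNPP; intro Hno.
      assert (c <= c - e); [|lra].
      apply Hlub. intros x Ex. apply Rnot_lt_le; intros Hx. apply Hno; eauto. }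
    destruct Hx as [x [[Hx Hfx] Hxe]].
    assert (x <= c) by (apply Hub; split; auto).
    assert (Hnear : Rabs (f x - f c) < f c - M) by (apply Hne; rewrite Rabs_left1; lra).
    apply Rabs_def2 in Hnear. lra. }
  assert (Hcb' : c < b) by (destruct (Rle_lt_or_eq_dec _ _ Hcb); [auto | subst; lra]).
  exists c; split; [lra|]; split; [|exact Hafter].
  apply Rle_antisym; [exact Hfc|]. apply Rnot_lt_le; intros Hlt.
  destruct (continuity_pt_eps f c (Hc c (conj Hac Hcb)) (M - f c)) as [e [He Hne]]; [lra|].
  set (t := Rmin (c + e / 2) b).
  assert (Ht : c < t <= b) by (unfold t; apply Rmin_case_strong; intros; lra).
  assert (Hnear : Rabs (f t - f c) < M - f c).
  { apply Hne. rewrite Rabs_right by lra. unfold t; apply Rmin_case_strong; intros; lra. }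
  apply Rabs_def2 in Hnear. specialize (Hafter t Ht). lra.
Qed.

Lemma first_level_crossing (f : R -> R) a b M : a <= b ->
  (forall t, a <= t <= b -> continuity_pt f t) ->
  f a < M -> M <= f b ->
  exists c, a < c <= b /\ f c = M /\ forall t, a <= t < c -> f t < M.
Proof.
  intros Hab Hc Ha Hb.
  set (g := fun t => - f (a + b - t)).
  destruct (last_level_crossing g a b (- M)) as [c [Hc1 [Hc2 Hc3]]]; auto.
  - intros t Ht. apply continuity_pt_opp.
    apply (continuity_pt_comp (fun t => a + b - t) f).
    + apply derivable_continuous_pt. reg.
    + apply Hc; lra.
  - unfold g. replace (a + b - a) with b by ring. lra.
  - unfold g. replace (a + b - b) with a by ring. lra.
  - exists (a + b - c). unfold g in Hc2, Hc3. repeat split; [lra | lra | lra |].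
    intros t Ht. specialize (Hc3 (a + b - t)).
    replace (a + b - (a + b - t)) with t in Hc3 by ring. enough (- M < - f t) by lra.
    apply Hc3; lra.
Qed.

Lemma intermediate_value (f : R -> R) a b M : a <= b ->
  (forall t, a <= t <= b -> continuity_pt f t) ->
  (f a - M) * (f b - M) <= 0 ->
  exists c, a <= c <= b /\ f c = M.
Proof.
  intros Hab Hc Hs.
  destruct (Req_dec (f a) M) as [Ha|Ha]; [exists a; split; [lra | exact Ha]|].
  destruct (Rlt_dec (f a) M) as [Hlt|Hge].
  - destruct (first_level_crossing f a b M) as [c [? [? _]]]; auto; [nra|].
    exists c; split; [lra | auto].
  - destruct (first_level_crossing (fun t => - f t) a b (- M)) as [c [? [? _]]]; auto;
      [intros t Ht; apply continuity_pt_opp, Hc, Ht | lra | nra |].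
    exists c; split; lra.
Qed.

Lemma stays_between (f : R -> R) a b p lo hi : a <= p <= b ->
  (forall t, a <= t <= b -> continuity_pt f t) ->
  lo < f p < hi ->
  (forall t, a <= t <= b -> f t <> lo /\ f t <> hi) ->
  forall t, a <= t <= b -> lo < f t < hi.
Proof.
  intros Hp Hc Hfp Hne t Ht.
  assert (Hcross : forall M, (f p - M) * (f t - M) <= 0 -> exists c, a <= c <= b /\ f c = M).
  { intros M HM. destruct (Rle_dec p t).
    - destruct (intermediate_value f p t M) as [c [? ?]]; auto;
        [intros; apply Hc; lra | exists c; split; [lra | auto]].
    - destruct (intermediate_value f t p M) as [c [? ?]]; [lra | intros; apply Hc; lra | nra |].
      exists c; split; [lra | auto]. }
  split; apply Rnot_le_lt; intros Hft.
  - destruct (Hcross lo) as [c [Hc' Hfc]]; [nra | exact (proj1 (Hne c Hc') Hfc)].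
  - destruct (Hcross hi) as [c [Hc' Hfc]]; [nra | exact (proj2 (Hne c Hc') Hfc)].
Qed.

Lemma is_derive_pos_right f x d : is_derive f x d -> 0 < d ->
  exists e, 0 < e /\ forall t, x < t < x + e -> f x < f t.
Proof.
  intros H Hd. apply is_derive_Reals in H.
  destruct (H (d / 2)) as [del Hdel]; [lra|].
  exists del; split; [apply cond_pos|].
  intros t Ht. specialize (Hdel (t - x)).
  replace (x + (t - x)) with t in Hdel by ring.
  assert (Hq : d / 2 < (f t - f x) / (t - x)).
  { enough (Hnear : Rabs ((f t - f x) / (t - x) - d) < d / 2) by (apply Rabs_def2 in Hnear; lra).
    apply Hdel; [lra | rewrite Rabs_right; lra]. }
  unfold Rdiv in Hq.
  apply Rlt_0_minus, (Rmult_lt_reg_r (/ (t - x))); [apply Rinv_0_lt_compat; lra | lra].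
Qed.

Lemma barrier_lower f a b m : a <= b ->
  (forall t, a <= t <= b -> continuity_pt f t) ->
  m <= f a ->
  (forall t, a <= t <= b -> f t = m -> exists d, is_derive f t d /\ 0 < d) ->
  forall t, a <= t <= b -> m <= f t.
Proof.
  intros Hab Hc Ha Hd t Ht. apply Rnot_lt_le; intros Hlt.
  destruct (last_level_crossing (fun x => - f x) a t (- m)) as [c [Hc1 [Hc2 Hc3]]];
    [lra | intros x Hx; apply continuity_pt_opp, Hc; lra | lra | lra |].
  destruct (Hd c) as [d [Hd1 Hd2]]; [lra | lra |].
  destruct (is_derive_pos_right f c d Hd1 Hd2) as [e [He He']].
  set (x := Rmin (c + e / 2) t).
  assert (Hx : c < x <= t) by (unfold x; apply Rmin_case_strong; intros; lra).
  assert (f c < f x) by (apply He'; split; [lra|]; unfold x; apply Rmin_case_strong; intros; lra).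
  specialize (Hc3 x Hx). lra.
Qed.

Lemma barrier_upper f df a b M : a <= b ->
  (forall t, a <= t <= b -> is_derive f t (df t)) ->
  f a <= M ->
  (forall t, a < t < b -> M < f t -> df t <= 0) ->
  forall t, a <= t <= b -> f t <= M.
Proof.
  intros Hab Hd Ha Hneg t Ht. apply Rnot_lt_le; intros Hlt.
  destruct (last_level_crossing f a t M) as [c [Hc1 [Hc2 Hc3]]];
    [lra | intros x Hx; apply (is_derive_continuity_pt f x (df x)), Hd; lra | lra | lra |].
  destruct (MVT_cor2 f df c t) as [xi [Hxi1 Hxi2]];
    [lra | intros x Hx; apply is_derive_Reals, Hd; lra |].
  assert (df xi <= 0) by (apply Hneg; [lra | apply Hc3; lra]).
  assert (df xi * (t - c) <= 0) by (apply Rmult_le_0_r; lra). lra.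
Qed.

(* [(D - c) e^(lam (t - t1))] cannot increase while it is positive. *)
Lemma exp_decay_comparison (D dD : R -> R) t1 lam c M :
  (forall t, t1 <= t -> is_derive D t (dD t)) -> D t1 <= c + M -> 0 <= M ->
  (forall t, t1 <= t -> c < D t -> dD t <= - lam * (D t - c)) ->
  forall t, t1 <= t -> D t <= c + M * exp (- lam * (t - t1)).
Proof.
  intros Hd H1 HM Hc t Ht.
  set (e := fun x => exp (lam * (x - t1))).
  set (h := fun x => (D x - c) * e x).
  set (dh := fun x => (dD x + lam * (D x - c)) * e x).
  assert (He : forall x, 0 < e x) by (intros; apply exp_pos).
  assert (Hh : forall x, t1 <= x <= t -> is_derive h x (dh x)).
  { intros x Hx. unfold h, dh, e.
    specialize (Hd x (proj1 Hx)). auto_derive; [eexists; exact Hd|].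
    replace (Derive (fun y => D y) x) with (dD x) by (symmetry; apply is_derive_unique, Hd).
    unfold Rminus; ring. }
  assert (Hht : h t <= M).
  { apply (barrier_upper h dh t1 t M); [lra | exact Hh | | | lra].
    - unfold h, e. rewrite Rminus_diag, Rmult_0_r, exp_0. lra.
    - intros x Hx Hhx. specialize (He x). unfold h in Hhx.
      assert (HcD : c < D x) by (apply Rnot_le_lt; intros; nra).
      pose proof (Hc x ltac:(lra) HcD). unfold dh. nra. }
  assert (Hinv : e t * exp (- lam * (t - t1)) = 1).
  { unfold e. rewrite <- exp_plus. replace (lam * (t - t1) + - lam * (t - t1)) with 0 by ring.
    apply exp_0. }
  pose proof (exp_pos (- lam * (t - t1))). unfold h in Hht.
  apply (Rmult_le_compat_r (exp (- lam * (t - t1)))) in Hht; [|lra].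
  rewrite Rmult_assoc, Hinv in Hht. lra.
Qed.

Lemma derive_bound_increment (f df : R -> R) a b L :
  a <= b -> (forall u, a <= u <= b -> is_derive f u (df u)) ->
  (forall u, a <= u <= b -> Rabs (df u) <= L) ->
  Rabs (f b - f a) <= L * (b - a).
Proof.
  intros Hab Hd HL. destruct (Req_dec a b) as [->|Hne].
  - rewrite !Rminus_diag, Rabs_R0, Rmult_0_r; lra.
  - destruct (MVT_cor2 f df a b) as [c [Hc1 Hc2]];
      [lra | intros; apply is_derive_Reals, Hd; lra |].
    rewrite Hc1, Rabs_mult, (Rabs_right (b - a)) by lra.
    apply Rmult_le_compat_r; [lra | apply HL; lra].
Qed.

Lemma one_lipschitz_of_derive f df :
  (forall x, is_derive f x (df x)) -> (forall x, Rabs (df x) <= 1) ->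
  forall x y, Rabs (f x - f y) <= Rabs (x - y).
Proof.
  intros Hd Hb x y. destruct (Rle_dec y x).
  - rewrite (Rabs_right (x - y)) by lra. rewrite <- (Rmult_1_l (x - y)).
    apply (derive_bound_increment f df); auto.
  - rewrite Rabs_minus_sym, (Rabs_minus_sym x), (Rabs_right (y - x)) by lra.
    rewrite <- (Rmult_1_l (y - x)). apply (derive_bound_increment f df); auto; lra.
Qed.

Lemma sin_lipschitz x y : Rabs (sin x - sin y) <= Rabs (x - y).
Proof.
  apply (one_lipschitz_of_derive sin cos).
  - intros; apply is_derive_Reals, derivable_pt_lim_sin.
  - intros; apply Rabs_le, COS_bound.
Qed.

(** * Angles modulo 2 PI *)

Lemma cos_2kPI_add k x : cos (2 * IZR k * PI + x) = cos x.
Proof.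
  destruct (Z_le_gt_dec 0 k) as [Hk|Hk].
  - rewrite <- (Z2Nat.id k), <- INR_IZR_INZ, Rplus_comm by lia. apply cos_period.
  - replace k with (- Z.of_nat (Z.to_nat (- k)))%Z by lia.
    rewrite opp_IZR, <- INR_IZR_INZ.
    rewrite <- (cos_period (2 * - INR (Z.to_nat (- k)) * PI + x) (Z.to_nat (- k))).
    f_equal; ring.
Qed.

Lemma sin_2kPI_add k x : sin (2 * IZR k * PI + x) = sin x.
Proof.
  destruct (Z_le_gt_dec 0 k) as [Hk|Hk].
  - rewrite <- (Z2Nat.id k), <- INR_IZR_INZ, Rplus_comm by lia. apply sin_period.
  - replace k with (- Z.of_nat (Z.to_nat (- k)))%Z by lia.
    rewrite opp_IZR, <- INR_IZR_INZ.
    rewrite <- (sin_period (2 * - INR (Z.to_nat (- k)) * PI + x) (Z.to_nat (- k))).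
    f_equal; ring.
Qed.

Lemma cos_sub_2kPI k x : cos (x - 2 * IZR k * PI) = cos x.
Proof. rewrite <- (cos_2kPI_add k). f_equal; ring. Qed.

Lemma sin_sub_2kPI k x : sin (x - 2 * IZR k * PI) = sin x.
Proof. rewrite <- (sin_2kPI_add k). f_equal; ring. Qed.

Lemma cos_2kPI_add_PI2 k : cos (2 * IZR k * PI + PI / 2) = 0.
Proof. rewrite cos_2kPI_add; apply cos_PI2. Qed.

Lemma cos_2kPI_sub_PI2 k : cos (2 * IZR k * PI - PI / 2) = 0.
Proof. unfold Rminus. rewrite cos_2kPI_add, cos_neg; apply cos_PI2. Qed.

Lemma cos_2kPI_add_3PI2 k : cos (2 * IZR k * PI + 3 * (PI / 2)) = 0.
Proof. rewrite cos_2kPI_add; apply cos_3PI2. Qed.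

Lemma cos_2kPI_sub_3PI2 k : cos (2 * IZR k * PI - 3 * (PI / 2)) = 0.
Proof. unfold Rminus. rewrite cos_2kPI_add, cos_neg; apply cos_3PI2. Qed.

Lemma cos_2kPI_add_PI k : cos (2 * IZR k * PI + PI) = -1.
Proof. rewrite cos_2kPI_add; apply cos_PI. Qed.

Lemma cos_2kPI_sub_PI k : cos (2 * IZR k * PI - PI) = -1.
Proof. unfold Rminus. rewrite cos_2kPI_add, cos_neg; apply cos_PI. Qed.

Lemma exists_2kPI_offset x : exists k : Z, 0 <= x - 2 * IZR k * PI < 2 * PI.
Proof.
  pose proof PI_RGT_0.
  exists (Zfloor (x / (2 * PI))).
  destruct (Zfloor_bound (x / (2 * PI))) as [H1 H2].
  set (z := IZR (Zfloor (x / (2 * PI)))) in *.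
  assert (Hx : x / (2 * PI) * (2 * PI) = x) by (field; lra).
  split; nra.
Qed.

Lemma sin_nonzero_arc x : sin x <> 0 ->
  exists c, c < x < c + PI /\ sin c = 0 /\ sin (c + PI) = 0 /\
    forall y, c < y < c + PI -> 0 < sin x * sin y.
Proof.
  intros Hx. pose proof PI_RGT_0. destruct (exists_2kPI_offset x) as [k Hk].
  set (K := 2 * IZR k * PI) in *.
  assert (HsK : forall y, sin y = sin (y - K)) by (intros; unfold K; rewrite sin_sub_2kPI; auto).
  assert (Hx0 : x - K <> 0) by (intros E; apply Hx; rewrite HsK, E; apply sin_0).
  destruct (Rlt_dec (x - K) PI) as [Hlt|Hge].
  - assert (Hpos : forall y, K < y < K + PI -> 0 < sin y) by (intros; rewrite HsK; apply sin_gt_0; lra).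
    exists K. repeat split; try lra.
    + rewrite HsK, Rminus_diag; apply sin_0.
    + rewrite HsK. replace (K + PI - K) with PI by ring. apply sin_PI.
    + intros y Hy. apply Rmult_lt_0_compat; apply Hpos; lra.
  - assert (HxPI : x - K <> PI) by (intros E; apply Hx; rewrite HsK, E; apply sin_PI).
    assert (Hneg : forall y, K + PI < y < K + PI + PI -> sin y < 0)
      by (intros; rewrite HsK; apply sin_lt_0; lra).
    exists (K + PI). repeat split; try lra.
    + rewrite HsK. replace (K + PI - K) with PI by ring. apply sin_PI.
    + rewrite HsK. replace (K + PI + PI - K) with (2 * PI) by ring. apply sin_2PI.
    + intros y Hy. pose proof (Hneg x ltac:(lra)). pose proof (Hneg y Hy). nra.
Qed.

Lemma cos_gt0_arc x : 0 < cos x ->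
  exists k : Z, 2 * IZR k * PI - PI / 2 < x < 2 * IZR k * PI + PI / 2.
Proof.
  intros H. destruct (exists_2kPI_offset x) as [k Hk].
  rewrite <- (cos_sub_2kPI k) in H. set (y := x - 2 * IZR k * PI) in *.
  destruct (Rlt_dec y (PI / 2)); [exists k; unfold y in *; lra|].
  destruct (Rle_dec y (3 * (PI / 2))).
  - assert (cos y <= 0) by (apply cos_le_0; lra). lra.
  - exists (k + 1)%Z. rewrite plus_IZR. unfold y in *. lra.
Qed.

Lemma cos_lt0_arc x : cos x < 0 ->
  exists k : Z, 2 * IZR k * PI + PI / 2 < x < 2 * IZR k * PI + 3 * (PI / 2).
Proof.
  intros H. destruct (exists_2kPI_offset x) as [k Hk]. exists k.
  rewrite <- (cos_sub_2kPI k) in H. set (y := x - 2 * IZR k * PI) in *.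
  destruct (Rle_dec y (PI / 2)); [assert (0 <= cos y) by (apply cos_ge_0; lra); lra|].
  destruct (Rlt_dec y (3 * (PI / 2))); [unfold y in *; lra|].
  assert (0 <= cos y) by (apply cos_ge_0_3PI2; lra). lra.
Qed.

Lemma cos_gtN1_arc x : -1 < cos x -> exists k : Z, 2 * IZR k * PI - PI < x < 2 * IZR k * PI + PI.
Proof.
  intros H. destruct (exists_2kPI_offset x) as [k Hk].
  rewrite <- (cos_sub_2kPI k) in H. set (y := x - 2 * IZR k * PI) in *.
  destruct (Rlt_dec y PI); [exists k; unfold y in *; lra|].
  destruct (Req_dec y PI) as [Hy|Hy]; [rewrite Hy, cos_PI in H; lra|].
  exists (k + 1)%Z. rewrite plus_IZR. unfold y in *. lra.
Qed.

Lemma cos_gt0_in_arc x k : 2 * IZR k * PI - PI < x < 2 * IZR k * PI + PI -> 0 < cos x ->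
  2 * IZR k * PI - PI / 2 < x < 2 * IZR k * PI + PI / 2.
Proof.
  intros Hx Hc. rewrite <- (cos_sub_2kPI k) in Hc. set (y := x - 2 * IZR k * PI) in *.
  split; apply Rnot_le_lt; intros Hy.
  - rewrite <- cos_neg in Hc. assert (cos (- y) <= 0) by (apply cos_le_0; unfold y in *; lra). lra.
  - assert (cos y <= 0) by (apply cos_le_0; unfold y in *; lra). lra.
Qed.

Lemma sin_diff_bounds a b c0 : -(PI / 2) < a < PI / 2 -> -(PI / 2) < b < PI / 2 ->
  c0 <= cos a -> c0 <= cos b -> b <= a ->
  c0 * (a - b) <= sin a - sin b <= a - b.
Proof.
  intros Ha Hb Hca Hcb Hba.
  destruct (Req_dec a b) as [->|Hne]; [split; lra|].
  destruct (MVT_cor2 sin cos b a) as [x [Hx1 Hx2]]; [lra | intros; apply derivable_pt_lim_sin |].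
  rewrite Hx1. pose proof PI_RGT_0. split; [|pose proof (COS_bound x); nra].
  apply Rmult_le_compat_r; [lra|].
  destruct (Rle_dec 0 x).
  - apply (Rle_trans _ (cos a)); [lra | apply cos_decr_1; lra].
  - apply (Rle_trans _ (cos b)); [lra|]. rewrite <- (cos_neg x), <- (cos_neg b).
    apply cos_decr_1; lra.
Qed.

(* [cos] is increasing on [[2kPI + PI, 2kPI + 3PI/2]], which contains both [x] and [y + 2PI]
   if [x - y >= 2PI]. *)
Lemma cos_lt_gap_lt_2PI k x y :
  2 * IZR k * PI + PI / 2 < x < 2 * IZR k * PI + 3 * (PI / 2) ->
  2 * IZR k * PI - PI < y < 2 * IZR k * PI + PI ->
  cos x < cos y -> Rabs (x - y) < 2 * PI.
Proof.
  intros Hx Hy Hc. pose proof PI_RGT_0. apply Rabs_def1; [|lra].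
  apply Rnot_le_lt; intros Hge.
  rewrite <- (cos_sub_2kPI k x), <- (cos_sub_2kPI (k - 1) y), minus_IZR in Hc.
  assert (cos (y - 2 * (IZR k - 1) * PI) <= cos (x - 2 * IZR k * PI)); [|lra].
  apply cos_incr_1; lra.
Qed.

Lemma range_lt_2PI_of_tail (f : R -> R) T K : 0 <= T ->
  (forall t, 0 <= t <= T -> continuity_pt f t) ->
  (forall t, T <= t -> K - PI / 2 < f t < K + PI / 2) ->
  (forall t, 0 <= t <= T -> K - 3 * (PI / 2) < f t < K + 3 * (PI / 2)) ->
  (forall t t', 0 <= t <= T -> 0 <= t' <= T -> f t - f t' < 2 * PI) ->
  exists a b, b - a < 2 * PI /\ forall t, 0 <= t -> a <= f t <= b.
Proof.
  intros HT Hc Htail Hhead Hpair. pose proof PI_RGT_0.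
  destruct (continuity_ab_maj f 0 T HT Hc) as [tm [Hmax Htm]].
  destruct (continuity_ab_min f 0 T HT Hc) as [tn [Hmin Htn]].
  exists (Rmin (f tn) (K - PI / 2)), (Rmax (f tm) (K + PI / 2)). split.
  - pose proof (Hpair tm tn Htm Htn). pose proof (Hhead tm Htm). pose proof (Hhead tn Htn).
    apply Rmax_case_strong; apply Rmin_case_strong; intros; lra.
  - intros t Ht. destruct (Rle_dec t T).
    + pose proof (Hmax t ltac:(lra)). pose proof (Hmin t ltac:(lra)).
      split; [apply (Rle_trans _ (f tn)); [apply Rmin_l | lra]
             | apply (Rle_trans _ (f tm)); [lra | apply Rmax_l]].
    + pose proof (Htail t ltac:(lra)).
      split; [apply (Rle_trans _ (K - PI / 2)); [apply Rmin_r | lra]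
             | apply (Rle_trans _ (K + PI / 2)); [lra | apply Rmax_r]].
Qed.

Lemma is_lim_p_infty_eps (f : R -> R) (L : R) :
  is_lim f p_infty L <->
  forall eps, 0 < eps -> exists M, forall t, M <= t -> Rabs (f t - L) < eps.
Proof.
  split.
  - intros H eps He. apply is_lim_spec in H. destruct (H (mkposreal _ He)) as [M HM].
    exists (M + 1). intros t Ht. apply HM; lra.
  - intros H. apply is_lim_spec. intros eps. destruct (H eps (cond_pos eps)) as [M HM].
    exists M. intros t Ht. apply HM; lra.
Qed.

Lemma is_lim_p_infty_ext (f g : R -> R) (L : R) M : (forall t, M <= t -> f t = g t) ->
  is_lim f p_infty L -> is_lim g p_infty L.
Proof.
  intros Heq. apply is_lim_ext_loc. exists M. intros t Ht. apply Heq; lra.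
Qed.

Lemma is_lim_comp_continuity_pt (f g : R -> R) (L : R) :
  is_lim f p_infty L -> continuity_pt g L -> is_lim (fun t => g (f t)) p_infty (g L).
Proof.
  intros Hf Hg. apply is_lim_comp_continuous; [exact Hf|].
  apply continuity_pt_filterlim, Hg.
Qed.

Lemma is_lim_sumN N (f : nat -> R -> R) (l : nat -> R) :
  (forall i, (i < N)%nat -> is_lim (f i) p_infty (l i)) ->
  is_lim (fun t => sumN N (fun i => f i t)) p_infty (sumN N l).
Proof.
  induction N; intros H; simpl; [apply is_lim_const|].
  apply (is_lim_plus' (fun t => sumN N (fun i => f i t)) (f N));
    [apply IHN; intros; apply H; lia | apply H; lia].
Qed.

Lemma eq_lim_of_frequently (g : R -> R) (L r : R) : is_lim g p_infty L ->
  (forall M, exists t, M <= t /\ g t = r) -> r = L.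
Proof.
  intros Hg Hr. destruct (Req_dec r L) as [|Hne]; [assumption|].
  destruct (proj1 (is_lim_p_infty_eps g L) Hg (Rabs (r - L))) as [M HM];
    [apply Rabs_pos_lt; lra|].
  destruct (Hr M) as [t [Ht Hgt]]. specialize (HM t Ht). rewrite Hgt in HM. lra.
Qed.

(* Barbalat-type argument: a Lipschitz [g] that keeps [|g| >= eps] at arbitrarily late times
   would make [F] decrease by a fixed amount infinitely often. *)
Lemma is_lim_zero_of_dissipation (F dF g : R -> R) Lg Fm :
  (forall t, 0 <= t -> is_derive F t (dF t)) ->
  (forall t, 0 <= t -> dF t <= - (g t * g t)) ->
  (forall t, 0 <= t -> Fm <= F t) ->
  0 < Lg -> (forall t t', 0 <= t <= t' -> Rabs (g t' - g t) <= Lg * (t' - t)) ->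
  is_lim g p_infty 0.
Proof.
  intros HF HdF HFm HLg Hlip. apply is_lim_p_infty_eps. intros eps Heps.
  apply NNPP; intros Hno.
  assert (Hinf : forall M, 0 <= M -> exists t, M <= t /\ eps <= Rabs (g t)).
  { intros M HM. apply NNPP; intros Hn. apply Hno. exists M. intros t Ht.
    rewrite Rminus_0_r. apply Rnot_le_lt; intros He. apply Hn; exists t; split; [lra | auto]. }
  assert (Hdecr : forall t t', 0 <= t <= t' -> F t' <= F t).
  { intros t t' Ht. destruct (Req_dec t t') as [->|Hne]; [lra|].
    destruct (MVT_cor2 F dF t t') as [c [Hc1 Hc2]]; [lra | intros; apply is_derive_Reals, HF; lra |].
    pose proof (HdF c ltac:(lra)). assert (dF c <= 0) by nra. nra. }
  set (del := eps / (2 * Lg)).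
  assert (Hdel : 0 < del) by (unfold del; apply Rdiv_lt_0_compat; lra).
  set (drop := eps * eps / 4 * del).
  assert (Hdrop : 0 < drop) by (unfold drop; apply Rmult_lt_0_compat; [nra | lra]).
  assert (Hstep : forall T, 0 <= T -> exists T', T <= T' /\ F T' <= F T - drop).
  { intros T HT. destruct (Hinf T HT) as [t [Ht1 Ht2]].
    exists (t + del). split; [lra|].
    destruct (MVT_cor2 F dF t (t + del)) as [xi [Hxi1 Hxi2]];
      [lra | intros; apply is_derive_Reals, HF; lra |].
    assert (Hbig : eps / 2 <= Rabs (g xi)).
    { pose proof (Hlip t xi ltac:(lra)).
      assert (Lg * (xi - t) <= eps / 2) by (unfold del in Hxi2; apply (Rmult_le_reg_l (/ Lg));
        [apply Rinv_0_lt_compat; lra | field_simplify; lra]).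
      pose proof (Rabs_triang_inv (g t) (g xi)) as Htri. rewrite Rabs_minus_sym in Htri. lra. }
    assert (eps / 2 * (eps / 2) <= g xi * g xi).
    { rewrite <- (Rabs_pos_eq (g xi * g xi)), Rabs_mult by nra.
      apply Rmult_le_compat; lra. }
    pose proof (HdF xi ltac:(lra)). pose proof (Hdecr T t ltac:(lra)).
    replace (t + del - t) with del in Hxi1 by ring. unfold drop. nra. }
  assert (Hiter : forall n : nat, exists T, 0 <= T /\ F T <= F 0 - INR n * drop).
  { induction n as [|n [T [HT HFT]]]; [exists 0; simpl; lra|].
    destruct (Hstep T HT) as [T' [HT' HF']]. exists T'; split; [lra|]. rewrite S_INR. lra. }
  destruct (INR_archimed drop (F 0 - Fm) Hdrop) as [n Hn].
  destruct (Hiter n) as [T [HT HFT]]. pose proof (HFm T HT). lra.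
Qed.

Section GapBounds.
Variables (D dD : R -> R) (t1 Delta : R).
Hypothesis HD : forall t, t1 <= t -> is_derive D t (dD t).

Lemma gap_upper_bound lam : 0 < lam -> 0 <= Delta -> D t1 <= PI ->
  (forall t, t1 <= t -> 0 <= D t -> dD t <= Delta - lam * D t) ->
  forall t, t1 <= t -> D t <= Delta / lam + PI * exp (- lam * (t - t1)).
Proof.
  intros Hlam HDelta Ht1 Hpos t Ht. pose proof PI_RGT_0.
  assert (0 <= Delta / lam) by (apply Rdiv_le_0_compat; lra).
  apply (exp_decay_comparison D dD t1 lam (Delta / lam) PI); auto; [lra | lra |].
  intros x Hx Hc. replace (- lam * (D x - Delta / lam)) with (Delta - lam * D x) by (field; lra).
  apply Hpos; lra.
Qed.

(* While negative, the gap grows at rate [> Delta]; so it is nonnegative at some time in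
   [[t1, t1 + PI / Delta]], and it stays so since [dD = Delta > 0] where [D = 0]. *)
Lemma gap_lower_bound lam Lam : 0 < lam -> 0 < Lam -> 0 < Delta -> -PI < D t1 ->
  (forall t, t1 <= t -> 0 <= D t -> Delta - Lam * D t <= dD t) ->
  (forall t, t1 <= t -> D t <= 0 -> Delta - lam * D t <= dD t) ->
  forall t, t1 + PI / Delta <= t ->
    Delta / Lam - Delta / Lam * exp (- Lam * (t - (t1 + PI / Delta))) <= D t.
Proof.
  intros Hlam HLam HDelta Ht1 Hpos Hneg. pose proof PI_RGT_0.
  set (t2 := t1 + PI / Delta).
  assert (Ht2 : t1 < t2) by (unfold t2; assert (0 < PI / Delta) by (apply Rdiv_lt_0_compat; lra); lra).
  assert (Hstay : forall u, t1 <= u -> 0 <= D u -> forall t, u <= t -> 0 <= D t).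
  { intros u Hu HDu t Ht. apply (barrier_lower D u t 0); [lra | | lra | | lra].
    - intros x Hx. apply (is_derive_continuity_pt D x (dD x)), HD. lra.
    - intros x Hx Hx0. exists (dD x). split; [apply HD; lra|].
      pose proof (Hneg x ltac:(lra) ltac:(lra)). nra. }
  assert (Hhit : exists u, t1 <= u <= t2 /\ 0 <= D u).
  { apply NNPP; intros Hno.
    destruct (MVT_cor2 D dD t1 t2) as [xi [Hxi1 Hxi2]];
      [lra | intros x Hx; apply is_derive_Reals, HD; lra |].
    assert (HDxi : D xi < 0) by (apply Rnot_le_lt; intros Hc; apply Hno; exists xi; split; [lra | auto]).
    assert (HD2 : D t2 < 0) by (apply Rnot_le_lt; intros Hc; apply Hno; exists t2; split; [lra | auto]).
    pose proof (Hneg xi ltac:(lra) ltac:(lra)).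
    assert (Hgrow : Delta * (t2 - t1) <= dD xi * (t2 - t1)) by (apply Rmult_le_compat_r; nra).
    replace (Delta * (t2 - t1)) with PI in Hgrow by (unfold t2; field; lra). lra. }
  destruct Hhit as [u [Hu HDu]].
  intros t Ht.
  assert (Hcmp := exp_decay_comparison (fun x => - D x) (fun x => - dD x) t2 Lam
                    (- (Delta / Lam)) (Delta / Lam)).
  enough (- D t <= - (Delta / Lam) + Delta / Lam * exp (- Lam * (t - t2))) by lra.
  assert (0 < Delta / Lam) by (apply Rdiv_lt_0_compat; lra).
  apply Hcmp; [| pose proof (Hstay u ltac:(lra) HDu t2 ltac:(lra)); lra | lra | | lra].
  - intros x Hx. apply (is_derive_opp D), HD. lra.
  - intros x Hx _. pose proof (Hpos x ltac:(lra) (Hstay u ltac:(lra) HDu x ltac:(lra))).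
    replace (- Lam * (- D x - - (Delta / Lam))) with (- (Delta - Lam * D x)) by (field; lra).
    lra.
Qed.

End GapBounds.

Lemma sumN_ext N f g : (forall i, (i < N)%nat -> f i = g i) -> sumN N f = sumN N g.
Proof. induction N; simpl; intros H; auto. rewrite IHN, H; auto. Qed.

Lemma sumN_le N f g : (forall i, (i < N)%nat -> f i <= g i) -> sumN N f <= sumN N g.
Proof. induction N; simpl; intros H; [lra|]. apply Rplus_le_compat; auto. Qed.

Lemma sumN_plus N f g : sumN N (fun i => f i + g i) = sumN N f + sumN N g.
Proof. induction N; simpl; [ring|]. rewrite IHN; ring. Qed.

Lemma sumN_const N c : sumN N (fun _ => c) = INR N * c.
Proof. induction N; simpl sumN; [simpl; ring|]. rewrite IHN, S_INR; ring. Qed.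

Lemma sumN_scal N c f : sumN N (fun i => c * f i) = c * sumN N f.
Proof. induction N; simpl; [ring|]. rewrite IHN; ring. Qed.

Lemma sumN_minus N f g : sumN N (fun i => f i - g i) = sumN N f - sumN N g.
Proof. induction N; simpl; [ring|]. rewrite IHN; ring. Qed.

Lemma Rabs_sumN N f : Rabs (sumN N f) <= sumN N (fun i => Rabs (f i)).
Proof. induction N; simpl; [rewrite Rabs_R0; lra|]. eapply Rle_trans; [apply Rabs_triang | lra]. Qed.

Lemma sumN_ge_term N f i : (i < N)%nat -> (forall j, (j < N)%nat -> 0 <= f j) -> f i <= sumN N f.
Proof.
  intros Hi Hf.
  assert (Hnn : forall n, (n <= N)%nat -> 0 <= sumN n f).
  { induction n; simpl; intros; [lra|]. pose proof (Hf n ltac:(lia)). pose proof (IHn ltac:(lia)). lra. }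
  induction N; [lia|]. simpl.
  destruct (Nat.eq_dec i N) as [->|Hne].
  - pose proof (Hnn N ltac:(lia)). lra.
  - pose proof (Hf N ltac:(lia)).
    enough (f i <= sumN N f) by lra.
    apply IHN; [lia | intros; apply Hf; lia | intros; apply Hnn; lia].
Qed.

Lemma mean_abs_le N g e : (0 < N)%nat -> (forall i, (i < N)%nat -> Rabs (g i) <= e) ->
  Rabs (/ INR N * sumN N g) <= e.
Proof.
  intros HN Hg. assert (HNr : 0 < INR N) by (apply lt_0_INR; lia).
  rewrite Rabs_mult, Rabs_right by (apply Rle_ge, Rlt_le, Rinv_0_lt_compat; lra).
  apply (Rmult_le_reg_l (INR N)); [lra|].
  rewrite <- Rmult_assoc, Rinv_r, Rmult_1_l, <- sumN_const by lra.
  eapply Rle_trans; [apply Rabs_sumN | apply sumN_le; auto].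
Qed.

Lemma maxN_ge N f i : (i < N)%nat -> f i <= maxN N f.
Proof.
  induction N; intros Hi; [lia|].
  destruct N as [|N'].
  - replace i with 0%nat by lia. simpl; lra.
  - change (maxN (S (S N')) f) with (Rmax (maxN (S N') f) (f (S N'))).
    destruct (Nat.eq_dec i (S N')) as [->|Hne]; [apply Rmax_r|].
    eapply Rle_trans; [apply IHN; lia | apply Rmax_l].
Qed.

Lemma is_derive_sumN N (f : nat -> R -> R) (df : nat -> R) t :
  (forall i, (i < N)%nat -> is_derive (f i) t (df i)) ->
  is_derive (fun x => sumN N (fun i => f i x)) t (sumN N df).
Proof.
  induction N; intros H; simpl.
  - apply (is_derive_const (K := R_AbsRing) (V := R_NormedModule) 0 t).
  - apply (is_derive_plus (fun x => sumN N (fun i => f i x)) (f N)).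
    + apply IHN; intros; apply H; lia.
    + apply H; lia.
Qed.

Lemma ex_common_threshold (P : nat -> R -> Prop) n :
  (forall i B B', B <= B' -> P i B -> P i B') ->
  (forall i, (i < n)%nat -> exists B, P i B) -> exists B, forall i, (i < n)%nat -> P i B.
Proof.
  intros Hmon. induction n; intros H.
  - exists 0; intros; lia.
  - destruct IHn as [B1 HB1]; [intros; apply H; lia|].
    destruct (H n ltac:(lia)) as [B2 HB2].
    exists (Rmax B1 B2). intros i Hi. destruct (Nat.eq_dec i n) as [->|Hne].
    + apply (Hmon n B2); [apply Rmax_r | auto].
    + apply (Hmon i B1); [apply Rmax_l | apply HB1; lia].
Qed.

(** * Combinations of square roots are not linear *)

Definition wsum (L : list (R * R)) (f : R -> R) : R :=
  fold_right (fun ca acc => fst ca * f (snd ca) + acc) 0 L.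

Definition inv_sqrt_pow (m : nat) (a v : R) : R := / sqrt (v - a) ^ (2 * m + 1).

Definition indicator (s a : R) : R := if Req_dec_T a s then 1 else 0.

Lemma wsum_scal L f k : wsum L (fun a => k * f a) = k * wsum L f.
Proof. induction L; simpl; [ring|]. rewrite IHL; ring. Qed.

Lemma wsum_ext L f g : (forall ca, In ca L -> f (snd ca) = g (snd ca)) -> wsum L f = wsum L g.
Proof. induction L; simpl; intros H; auto. rewrite H, IHL; auto. Qed.

Lemma wsum_app L1 L2 f : wsum (L1 ++ L2) f = wsum L1 f + wsum L2 f.
Proof. induction L1; simpl; [ring|]. rewrite IHL1; ring. Qed.

Lemma wsum_map_seq (c a : nat -> R) f n :
  wsum (map (fun i => (c i, a i)) (seq 0 n)) f = sumN n (fun i => c i * f (a i)).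
Proof.
  induction n; [reflexivity|].
  rewrite seq_S, map_app, wsum_app, IHn. simpl. ring.
Qed.

Definition drop_node (L : list (R * R)) (s : R) :=
  filter (fun ca => if Req_dec_T (snd ca) s then false else true) L.

Lemma wsum_drop_node L s f : wsum L f = wsum (drop_node L s) f + wsum L (indicator s) * f s.
Proof.
  unfold indicator. induction L as [|[c a] L IH]; simpl; [ring|].
  destruct (Req_dec_T a s) as [->|Hne]; simpl; rewrite IH; ring.
Qed.

Lemma in_drop_node L s ca : In ca (drop_node L s) -> In ca L.
Proof. unfold drop_node. intros H. apply filter_In in H. tauto. Qed.

Lemma length_drop_node L s : (exists ca, In ca L /\ snd ca = s) ->
  (length (drop_node L s) < length L)%nat.
Proof.
  unfold drop_node. induction L as [|[c a] L IH]; intros [ca [Hin Hs]]; [destruct Hin|].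
  simpl. pose proof (filter_length_le (fun ca => if Req_dec_T (snd ca) s then false else true) L).
  destruct (Req_dec_T a s) as [Ha|Ha]; simpl; [lia|].
  destruct Hin as [<-|Hin]; [simpl in Hs; contradiction|].
  specialize (IH (ex_intro _ ca (conj Hin Hs))). lia.
Qed.

Lemma exists_max_node (L : list (R * R)) : L <> nil ->
  exists ca, In ca L /\ forall cb, In cb L -> snd cb <= snd ca.
Proof.
  induction L as [|cx L IH]; [intros Hnil; congruence | intros _].
  destruct L as [|cy L'].
  - exists cx. split; [left; auto|]. intros cb [<-|[]]; lra.
  - destruct IH as [ca [Hca Hmax]]; [discriminate|].
    destruct (Rle_dec (snd cx) (snd ca)).
    + exists ca. split; [right; auto|]. intros cb [<-|Hcb]; [lra | auto].
    + exists cx. split; [left; auto|]. intros cb [<-|Hcb]; [lra|].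
      pose proof (Hmax cb Hcb); lra.
Qed.

Lemma is_lim_seq_wsum L (h : nat -> R -> R) (l : R -> R) :
  (forall ca, In ca L -> is_lim_seq (fun m => h m (snd ca)) (l (snd ca))) ->
  is_lim_seq (fun m => wsum L (h m)) (wsum L l).
Proof.
  induction L as [|ca L IH]; intros H; simpl; [apply is_lim_seq_const|].
  apply is_lim_seq_plus'.
  - apply (is_lim_seq_scal_l (fun m => h m (snd ca)) (fst ca) (l (snd ca))). apply H; left; auto.
  - apply IH; intros; apply H; right; auto.
Qed.

(* Multiplying by [sqrt (v0 - s) ^ (2m+3)] and letting [m -> oo] kills every node below [s]. *)
Lemma wsum_indicator_max_node L v0 s : s < v0 -> (forall ca, In ca L -> snd ca <= s) ->
  (forall m, wsum L (fun a => inv_sqrt_pow (S m) a v0) = 0) ->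
  wsum L (indicator s) = 0.
Proof.
  intros Hs Hmax HS.
  set (w0 := sqrt (v0 - s)).
  assert (Hw0 : 0 < w0) by (apply sqrt_lt_R0; lra).
  set (scaled := fun m a => (w0 / sqrt (v0 - a)) ^ (2 * S m + 1)).
  assert (Hzero : forall m, wsum L (scaled m) = 0).
  { intros m. rewrite <- (Rmult_0_r (w0 ^ (2 * S m + 1))), <- (HS m), <- wsum_scal.
    apply wsum_ext. intros ca Hca. unfold scaled, inv_sqrt_pow, Rdiv.
    rewrite Rpow_mult_distr, pow_inv. reflexivity. }
  assert (Hlim : is_lim_seq (fun m => wsum L (scaled m)) (wsum L (indicator s))).
  { apply is_lim_seq_wsum. intros ca Hca. unfold indicator, scaled.
    destruct (Req_dec_T (snd ca) s) as [Heq | Hne].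
    - rewrite Heq. eapply is_lim_seq_ext; [| apply is_lim_seq_const].
      intros m. fold w0. rewrite Rdiv_diag, pow1 by lra. reflexivity.
    - assert (Hlt : snd ca < s) by (pose proof (Hmax ca Hca); lra).
      assert (Hq : 0 < sqrt (v0 - snd ca)) by (apply sqrt_lt_R0; lra).
      set (r := w0 / sqrt (v0 - snd ca)).
      assert (Hr0 : 0 < r) by (unfold r; apply Rdiv_lt_0_compat; lra).
      assert (Hr1 : r < 1).
      { unfold r. apply (Rmult_lt_reg_r (sqrt (v0 - snd ca))); [exact Hq|]. unfold Rdiv.
        rewrite Rmult_assoc, Rinv_l, Rmult_1_r, Rmult_1_l by lra.
        apply sqrt_lt_1; lra. }
      eapply is_lim_seq_ext.
      + intros m. symmetry. replace (2 * S m + 1)%nat with (3 + 2 * m)%nat by lia.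
        rewrite pow_add, pow_mult. reflexivity.
      + replace 0 with (r ^ 3 * 0) by ring.
        apply (is_lim_seq_scal_l (fun m => (r ^ 2) ^ m) (r ^ 3) 0), is_lim_seq_geom.
        rewrite Rabs_right by (apply Rle_ge, pow_le; lra). simpl. nra. }
  apply is_lim_seq_unique in Hlim.
  rewrite (is_lim_seq_unique _ 0) in Hlim; [injection Hlim; auto|].
  eapply is_lim_seq_ext; [| apply is_lim_seq_const]. intros m. rewrite Hzero; auto.
Qed.

Lemma wsum_zero_of_inv_sqrt_pows n : forall L v0 f, (length L <= n)%nat ->
  (forall ca, In ca L -> snd ca < v0) ->
  (forall m, wsum L (fun a => inv_sqrt_pow (S m) a v0) = 0) ->
  wsum L f = 0.
Proof.
  induction n as [|n IH]; intros L v0 f Hlen HL HS.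
  { destruct L; [reflexivity | simpl in Hlen; lia]. }
  destruct L as [|x l] eqn:EL; [reflexivity|]. rewrite <- EL in *.
  destruct (exists_max_node L) as [cs [Hcs Hmax]]; [rewrite EL; discriminate|].
  assert (Hdrop : forall g, wsum L g = wsum (drop_node L (snd cs)) g).
  { intros g. rewrite (wsum_drop_node L (snd cs)), (wsum_indicator_max_node L v0 (snd cs));
      [ring | apply HL, Hcs | exact Hmax | exact HS]. }
  rewrite Hdrop. apply (IH _ v0).
  - pose proof (length_drop_node L (snd cs) (ex_intro _ cs (conj Hcs eq_refl))).
    rewrite EL in *. simpl in *. lia.
  - intros ca Hca. apply HL, (in_drop_node L (snd cs)), Hca.
  - intros m. rewrite <- Hdrop. apply HS.
Qed.

Lemma is_derive_wsum L (F : R -> R -> R) (dF : R -> R) v :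
  (forall ca, In ca L -> is_derive (F (snd ca)) v (dF (snd ca))) ->
  is_derive (fun x => wsum L (fun a => F a x)) v (wsum L dF).
Proof.
  induction L as [|ca L IH]; intros H; simpl.
  - apply (is_derive_const (K := R_AbsRing) (V := R_NormedModule) 0 v).
  - apply (is_derive_plus (fun x => fst ca * F (snd ca) x) (fun x => wsum L (fun a => F a x))).
    + apply (is_derive_scal (F (snd ca))). apply H; left; auto.
    + apply IH. intros; apply H; right; auto.
Qed.

Lemma is_derive_sqrt_sub a v : a < v -> is_derive (fun x => sqrt (x - a)) v (/ 2 * inv_sqrt_pow 0 a v).
Proof.
  intros H. assert (0 < sqrt (v - a)) by (apply sqrt_lt_R0; lra).
  auto_derive; [lra|]. unfold inv_sqrt_pow. simpl. unfold Rminus in *. field. lra.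
Qed.

Lemma is_derive_inv_sqrt_pow m a v : a < v ->
  is_derive (inv_sqrt_pow m a) v (- (2 * INR m + 1) / 2 * inv_sqrt_pow (S m) a v).
Proof.
  intros H. unfold inv_sqrt_pow.
  assert (Hw : 0 < sqrt (v - a)) by (apply sqrt_lt_R0; lra).
  auto_derive.
  { repeat split; [lra | apply pow_nonzero, Rgt_not_eq, sqrt_lt_R0; lra]. }
  unfold Rminus in *. set (w := sqrt (v + - a)) in *.
  replace (m + (m + 0) + 1)%nat with (S (2 * m)) by lia.
  replace (2 * S m + 1)%nat with (S (S (S (2 * m)))) by lia.
  rewrite S_INR, mult_INR. simpl pred. simpl pow. simpl INR. field.
  split; [apply pow_nonzero | ]; lra.
Qed.

Lemma is_derive_unique_on_interval (f g : R -> R) p q v l1 l2 :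
  (forall x, p < x < q -> f x = g x) -> p < v < q ->
  is_derive f v l1 -> is_derive g v l2 -> l1 = l2.
Proof.
  intros Heq Hv H1 H2.
  assert (He : 0 < Rmin (v - p) (q - v)) by (apply Rmin_case_strong; intros; lra).
  assert (Hloc : locally v (fun t => f t = g t)).
  { exists (mkposreal _ He). intros y Hy. apply Heq.
    change (Rabs (y - v) < Rmin (v - p) (q - v)) in Hy.
    apply Rabs_def2 in Hy. revert Hy; apply Rmin_case_strong; intros; lra. }
  apply (is_derive_ext_loc f g v l1 Hloc), is_derive_unique in H1.
  apply is_derive_unique in H2. congruence.
Qed.

Lemma wsum_inv_sqrt_pow_succ_zero L p q m C : p < q -> (forall ca, In ca L -> snd ca < p) ->
  (forall v, p < v < q -> wsum L (fun a => inv_sqrt_pow m a v) = C) ->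
  forall v, p < v < q -> wsum L (fun a => inv_sqrt_pow (S m) a v) = 0.
Proof.
  intros Hpq HL HC v Hv.
  assert (Hd := is_derive_wsum L (inv_sqrt_pow m)
                 (fun a => - (2 * INR m + 1) / 2 * inv_sqrt_pow (S m) a v) v).
  assert (Hk : - (2 * INR m + 1) / 2 <> 0) by (pose proof (pos_INR m); lra).
  assert (Hz := is_derive_unique_on_interval _ (fun _ => C) p q v _ 0 HC Hv
          (Hd ltac:(intros ca Hca; apply is_derive_inv_sqrt_pow; pose proof (HL ca Hca); lra))
          (is_derive_const (K := R_AbsRing) (V := R_NormedModule) C v)).
  rewrite wsum_scal in Hz. apply Rmult_integral in Hz. destruct Hz; [contradiction | auto].
Qed.

(* Differentiating [sum c_k sqrt (v - a_k) = Nr v] once gives a constant, and every further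
   derivative gives [sum c_k (v - a_k)^(-(2m+1)/2) = 0]. *)
Lemma wsum_sqrt_not_linear L Nr p q : 0 <= p -> p < q -> 0 < Nr ->
  (forall ca, In ca L -> snd ca < p) ->
  ~ (forall v, p < v < q -> wsum L (fun a => sqrt (v - a)) = Nr * v).
Proof.
  intros Hp Hpq HN HL HC.
  assert (H0 : forall v, p < v < q -> wsum L (fun a => inv_sqrt_pow 0 a v) = 2 * Nr).
  { intros v Hv.
    assert (Hd := is_derive_wsum L (fun a x => sqrt (x - a)) (fun a => / 2 * inv_sqrt_pow 0 a v) v).
    assert (Hl : is_derive (fun x => Nr * x) v Nr) by (auto_derive; auto; ring).
    assert (Hz := is_derive_unique_on_interval _ _ p q v _ _ HC Hv
            (Hd ltac:(intros ca Hca; apply is_derive_sqrt_sub; pose proof (HL ca Hca); lra)) Hl).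
    rewrite wsum_scal in Hz. lra. }
  set (v0 := (p + q) / 2).
  assert (Hv0 : p < v0 < q) by (unfold v0; lra).
  assert (HS : forall m v, p < v < q -> wsum L (fun a => inv_sqrt_pow (S m) a v) = 0).
  { induction m.
    - apply (wsum_inv_sqrt_pow_succ_zero L p q 0 (2 * Nr)); auto.
    - apply (wsum_inv_sqrt_pow_succ_zero L p q (S m) 0); auto. }
  assert (Hz := wsum_zero_of_inv_sqrt_pows (length L) L v0 (fun a => sqrt (v0 - a)) (le_n _)
                  ltac:(intros ca Hca; pose proof (HL ca Hca); lra) (fun m => HS m v0 Hv0)).
  rewrite HC in Hz by exact Hv0. nra.
Qed.

(** * The Winfree model *)

Section Winfree.
Variables (N : nat) (omega : nat -> R) (kappa : R) (theta : nat -> R -> R) (mu : R).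
Local Notation Rt := (order_param N theta).
Local Notation W := (Omega_inf N omega).
Local Notation sin_floor := (sqrt (mu * (2 - mu))).
Hypothesis HN : (1 <= N)%nat.
Hypothesis Htheta : forall i t, (i < N)%nat -> 0 <= t ->
  is_derive (theta i) t (omega i - kappa * Rt t * sin (theta i t)).
Hypothesis Hmu : 0 < mu.
Hypothesis Hmu1 : mu < 1.
Hypothesis HR0 : mu < Rt 0.
Hypothesis Hkappa : W < kappa * (Rt 0 - mu) * sin_floor.

Definition phase_vel i t := omega i - kappa * Rt t * sin (theta i t).

Lemma INR_N_pos : 0 < INR N.
Proof. apply lt_0_INR; lia. Qed.

Lemma Rabs_omega_le i : (i < N)%nat -> Rabs (omega i) <= W.
Proof. intros Hi. apply (maxN_ge N (fun i => Rabs (omega i))), Hi. Qed.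

Lemma W_ge0 : 0 <= W.
Proof. eapply Rle_trans; [apply Rabs_pos | apply (Rabs_omega_le 0); lia]. Qed.

Lemma sin_floor_sqr : sin_floor * sin_floor = mu * (2 - mu).
Proof. apply sqrt_sqrt; nra. Qed.

Lemma sin_floor_gt0 : 0 < sin_floor.
Proof. apply sqrt_lt_R0; nra. Qed.

Lemma sin_floor_lt1 : sin_floor < 1.
Proof. rewrite <- sqrt_1. apply sqrt_lt_1; nra. Qed.

Lemma kappa_gt0 : 0 < kappa.
Proof.
  pose proof W_ge0; pose proof sin_floor_gt0.
  apply Rnot_le_lt; intros Hk.
  assert (kappa * (Rt 0 - mu) * sin_floor <= 0); [|lra].
  apply Rmult_le_0_r; [apply Rmult_le_0_r|]; lra.
Qed.

Lemma order_param_bounds t : 0 <= Rt t <= 2.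
Proof.
  pose proof INR_N_pos. unfold order_param.
  assert (H0 : 0 <= sumN N (fun j => 1 + cos (theta j t)) <= INR N * 2).
  { rewrite <- (Rmult_0_r (INR N)), <- !sumN_const.
    split; apply sumN_le; intros; pose proof (COS_bound (theta i t)); lra. }
  split.
  - apply Rmult_le_pos; [apply Rlt_le, Rinv_0_lt_compat |]; lra.
  - apply (Rmult_le_reg_l (INR N)); [lra|]. rewrite <- Rmult_assoc, Rinv_r by lra. lra.
Qed.

Lemma theta_derive i t : (i < N)%nat -> 0 <= t -> is_derive (theta i) t (phase_vel i t).
Proof. apply Htheta. Qed.

Lemma theta_continuity i t : (i < N)%nat -> 0 <= t -> continuity_pt (theta i) t.
Proof. intros; eapply is_derive_continuity_pt, theta_derive; eauto. Qed.

Lemma cos_theta_derive i t : (i < N)%nat -> 0 <= t ->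
  is_derive (fun x => cos (theta i x)) t (- sin (theta i t) * phase_vel i t).
Proof.
  intros Hi Ht. rewrite Rmult_comm.
  apply (is_derive_comp cos (theta i)); [apply is_derive_Reals, derivable_pt_lim_cos |].
  apply theta_derive; auto.
Qed.

Lemma cos_theta_continuity i t : (i < N)%nat -> 0 <= t -> continuity_pt (fun x => cos (theta i x)) t.
Proof. intros; eapply is_derive_continuity_pt, cos_theta_derive; eauto. Qed.

Definition order_param_vel t := / INR N * sumN N (fun j => - sin (theta j t) * phase_vel j t).

Lemma order_param_derive t : 0 <= t -> is_derive Rt t (order_param_vel t).
Proof.
  intros Ht. apply (is_derive_scal (fun x => sumN N (fun j => 1 + cos (theta j x)))).
  apply (is_derive_sumN N (fun j x => 1 + cos (theta j x))). intros i Hi.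
  rewrite <- (Rplus_0_l (- _ * _)).
  apply (is_derive_plus (fun _ => 1));
    [exact (is_derive_const (K := R_AbsRing) (V := R_NormedModule) 1 t) |].
  apply cos_theta_derive; auto.
Qed.

Lemma order_param_continuity t : 0 <= t -> continuity_pt Rt t.
Proof. intros; eapply is_derive_continuity_pt, order_param_derive; eauto. Qed.

Lemma abs_sin_ge_sin_floor x : -1 + mu <= cos x <= 1 - mu -> sin_floor <= Rabs (sin x).
Proof.
  intros Hc. rewrite <- (sqrt_Rsqr (Rabs (sin x))), <- Rsqr_abs by apply Rabs_pos.
  apply sqrt_le_1_alt. pose proof (sin2_cos2 x). unfold Rsqr in *. nra.
Qed.

(* In the band [|sin| >= sin_floor], so the coupling term [kappa R |sin|] beats [|omega i|]. *)
Lemma cos_theta_increasing_in_band i t : (i < N)%nat -> W < kappa * Rt t * sin_floor ->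
  -1 + mu <= cos (theta i t) <= 1 - mu ->
  0 < - sin (theta i t) * phase_vel i t.
Proof.
  intros Hi HW Hc. unfold phase_vel.
  pose proof (abs_sin_ge_sin_floor _ Hc) as Hs.
  set (x := sin (theta i t)) in *.
  pose proof (Rabs_omega_le i Hi). pose proof sin_floor_gt0.
  assert (HkR : 0 < kappa * Rt t) by (apply Rnot_le_lt; intros Hle; pose proof W_ge0; nra).
  assert (Hox : omega i * x <= W * Rabs x).
  { eapply Rle_trans; [apply Rle_abs|].
    rewrite Rabs_mult. apply Rmult_le_compat_r; [apply Rabs_pos | lra]. }
  assert (Hxx : x * x = Rabs x * Rabs x) by (rewrite <- Rabs_mult, Rabs_right; nra).
  replace (- x * (omega i - kappa * Rt t * x)) with (kappa * Rt t * (x * x) - omega i * x) by ring.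
  assert (kappa * Rt t * sin_floor <= kappa * Rt t * Rabs x) by (apply Rmult_le_compat_l; lra).
  assert (0 < Rabs x * (kappa * Rt t * Rabs x - W)) by (apply Rmult_lt_0_compat; lra).
  rewrite Hxx. nra.
Qed.

Lemma cos_theta_band_barrier T : (forall t, 0 <= t <= T -> W < kappa * Rt t * sin_floor) ->
  forall i t0 m, (i < N)%nat -> 0 <= t0 -> -1 + mu <= m <= 1 - mu -> m <= cos (theta i t0) ->
  forall t, t0 <= t <= T -> m <= cos (theta i t).
Proof.
  intros HW i t0 m Hi Ht0 Hm Hc0 t Ht.
  apply (barrier_lower (fun x => cos (theta i x)) t0 T m); [lra | | exact Hc0 | | lra].
  - intros x Hx; apply cos_theta_continuity; auto; lra.
  - intros x Hx Heq. exists (- sin (theta i x) * phase_vel i x). split.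
    + apply cos_theta_derive; auto; lra.
    + apply cos_theta_increasing_in_band; auto; [apply HW; lra | lra].
Qed.

(* Each term [1 + cos theta_i] drops by at most [mu]: in the band it stays above
   [1 + min (cos theta_i(0)) (1 - mu)], and below the band it is [< mu] to begin with. *)
Lemma order_param_drop_le_mu T : 0 <= T -> (forall t, 0 <= t <= T -> W < kappa * Rt t * sin_floor) ->
  Rt 0 - mu <= Rt T.
Proof.
  intros HT HW. pose proof INR_N_pos.
  assert (Hterm : forall i, (i < N)%nat -> 1 + cos (theta i 0) - mu <= 1 + cos (theta i T)).
  { intros i Hi. pose proof (COS_bound (theta i 0)). pose proof (COS_bound (theta i T)).
    destruct (Rle_dec (-1 + mu) (cos (theta i 0))) as [Hg|Hb]; [|lra].
    enough (Hmin : Rmin (cos (theta i 0)) (1 - mu) <= cos (theta i T))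
      by (revert Hmin; apply Rmin_case_strong; intros; lra).
    apply (cos_theta_band_barrier T HW i 0); [auto | lra | | apply Rmin_l | lra].
    split; [apply Rmin_case_strong; intros; lra | apply Rmin_r]. }
  unfold order_param. replace mu with (/ INR N * (INR N * mu)) by (field; lra).
  rewrite <- Rmult_minus_distr_l, <- sumN_const, <- sumN_minus.
  apply Rmult_le_compat_l; [apply Rlt_le, Rinv_0_lt_compat; lra|].
  apply sumN_le. exact Hterm.
Qed.

Lemma order_param_ge t : 0 <= t -> Rt 0 - mu <= Rt t.
Proof.
  intros Ht1. apply Rnot_lt_le; intros Hlt.
  pose proof kappa_gt0; pose proof sin_floor_gt0.
  (* a margin [delta] keeping [kappa (R0 - mu - delta) sin_floor] above [W] *)
  set (delta := (kappa * (Rt 0 - mu) * sin_floor - W) / (2 * kappa * sin_floor)).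
  assert (Hdelta : 0 < delta) by (apply Rdiv_lt_0_compat; nra).
  assert (HWdelta : W < kappa * (Rt 0 - mu - delta) * sin_floor).
  { replace (kappa * (Rt 0 - mu - delta) * sin_floor)
      with (kappa * (Rt 0 - mu) * sin_floor - (kappa * (Rt 0 - mu) * sin_floor - W) / 2)
      by (unfold delta; field; lra). lra. }
  set (L := Rmax (Rt t) (Rt 0 - mu - delta)).
  assert (HL : L < Rt 0 - mu) by (unfold L; apply Rmax_case_strong; intros; lra).
  destruct (first_level_crossing (fun x => - Rt x) 0 t (- L)) as [c [Hc1 [Hc2 Hc3]]];
    [lra | intros x Hx; apply continuity_pt_opp, order_param_continuity; lra | lra | |].
  { pose proof (Rmax_l (Rt t) (Rt 0 - mu - delta)) as HLt. fold L in HLt. lra. }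
  enough (Rt 0 - mu <= Rt c) by lra.
  apply order_param_drop_le_mu; [lra|]. intros x Hx.
  assert (Rt 0 - mu - delta <= Rt x).
  { pose proof (Rmax_r (Rt t) (Rt 0 - mu - delta)) as HLd. fold L in HLd.
    destruct (Rle_lt_or_eq_dec _ _ (proj2 Hx)) as [Hlt' | ->]; [|lra].
    pose proof (Hc3 x ltac:(lra)). lra. }
  apply (Rlt_le_trans _ _ _ HWdelta). apply Rmult_le_compat_r; [lra|].
  apply Rmult_le_compat_l; lra.
Qed.

Lemma coupling_gt_W t : 0 <= t -> W < kappa * Rt t * sin_floor.
Proof.
  intros Ht. pose proof (order_param_ge t Ht). pose proof kappa_gt0; pose proof sin_floor_gt0.
  apply (Rlt_le_trans _ _ _ Hkappa). apply Rmult_le_compat_r; [lra|]. apply Rmult_le_compat_l; lra.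
Qed.

Lemma cos_theta_ge_persists i t0 m : (i < N)%nat -> 0 <= t0 -> -1 + mu <= m <= 1 - mu ->
  m <= cos (theta i t0) -> forall t, t0 <= t -> m <= cos (theta i t).
Proof.
  intros Hi Ht0 Hm Hc t Ht.
  apply (cos_theta_band_barrier t) with (t0 := t0); auto; [| lra].
  intros x Hx; apply coupling_gt_W; lra.
Qed.

Definition escape_speed := kappa * (Rt 0 - mu) * sin_floor - W.
Definition tau := PI / escape_speed.

Lemma escape_speed_gt0 : 0 < escape_speed.
Proof. unfold escape_speed; lra. Qed.

Lemma tau_gt0 : 0 < tau.
Proof. apply Rdiv_lt_0_compat; [apply PI_RGT_0 | apply escape_speed_gt0]. Qed.

Lemma phase_vel_opposes_sin i t sg : (i < N)%nat -> 0 <= t -> Rabs sg = 1 ->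
  sin_floor <= sg * sin (theta i t) -> sg * phase_vel i t <= - escape_speed.
Proof.
  intros Hi Ht Hsg Hs. unfold phase_vel, escape_speed.
  pose proof (order_param_ge t Ht). pose proof (Rabs_omega_le i Hi).
  pose proof kappa_gt0. pose proof sin_floor_gt0.
  assert (sg * omega i <= W) by (eapply Rle_trans; [apply Rle_abs | rewrite Rabs_mult, Hsg; lra]).
  assert (kappa * (Rt 0 - mu) * sin_floor <= kappa * Rt t * (sg * sin (theta i t)))
    by (apply Rmult_le_compat; [nra | lra | apply Rmult_le_compat_l; lra | lra]).
  replace (sg * (omega i - kappa * Rt t * sin (theta i t)))
    with (sg * omega i - kappa * Rt t * (sg * sin (theta i t))) by ring.
  lra.
Qed.

(* While [cos theta_i < 1 - mu], [theta_i] is trapped in a half-period where [sin] keeps its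
   sign and moves monotonically at speed [>= escape_speed]; in time [tau] it would cover [PI]. *)
Lemma cos_theta_reaches_top i t0 : (i < N)%nat -> 0 <= t0 -> -1 + mu <= cos (theta i t0) ->
  exists u, t0 <= u <= t0 + tau /\ 1 - mu <= cos (theta i u).
Proof.
  intros Hi Ht0 Hc0. apply NNPP; intro Hno.
  pose proof tau_gt0. pose proof escape_speed_gt0. pose proof sin_floor_gt0.
  set (t1 := t0 + tau).
  assert (Hsin : forall u, t0 <= u <= t1 -> sin_floor <= Rabs (sin (theta i u))).
  { intros u Hu. apply abs_sin_ge_sin_floor. split.
    - apply (cos_theta_ge_persists i t0); auto; lra.
    - apply Rnot_lt_le; intros Hc. apply Hno. exists u; split; [exact Hu | lra]. }
  assert (Hs0 : sin (theta i t0) <> 0).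
  { intros E. pose proof (Hsin t0 ltac:(unfold t1; lra)) as Hs. rewrite E, Rabs_R0 in Hs. lra. }
  destruct (sin_nonzero_arc _ Hs0) as [c [Hc [Hsc [HscPI Hsign]]]].
  assert (Hin : forall u, t0 <= u <= t1 -> c < theta i u < c + PI).
  { apply (stays_between (theta i) t0 t1 t0); [unfold t1; lra | | exact Hc |].
    - intros x Hx; apply theta_continuity; auto; lra.
    - intros x Hx. pose proof (Hsin x Hx) as Hsx.
      split; intros E; rewrite E in Hsx; [rewrite Hsc in Hsx | rewrite HscPI in Hsx];
        rewrite Rabs_R0 in Hsx; lra. }
  set (sg := if Rlt_dec 0 (sin (theta i t0)) then 1 else -1).
  assert (Hsg : forall u, t0 <= u <= t1 -> sg * sin (theta i u) = Rabs (sin (theta i u))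
                                          /\ Rabs sg = 1).
  { intros u Hu. pose proof (Hsign (theta i u) (Hin u Hu)). unfold sg.
    destruct (Rlt_dec 0 (sin (theta i t0))).
    - rewrite Rabs_R1, Rabs_right by nra. split; ring.
    - rewrite Rabs_left, Rabs_left by nra. split; ring. }
  destruct (MVT_cor2 (theta i) (phase_vel i) t0 t1) as [xi [Hxi1 Hxi2]];
    [unfold t1; lra | intros x Hx; apply is_derive_Reals, theta_derive; auto; lra |].
  assert (Hvel : sg * phase_vel i xi <= - escape_speed).
  { destruct (Hsg xi ltac:(lra)) as [Hx1 Hx2].
    apply phase_vel_opposes_sin; [auto | lra | exact Hx2 | rewrite Hx1; apply Hsin; lra]. }
  assert (Hd : sg * (theta i t1 - theta i t0) <= - PI).
  { rewrite Hxi1. replace (sg * (phase_vel i xi * (t1 - t0))) with (sg * phase_vel i xi * tau)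
      by (unfold t1; ring).
    replace (- PI) with (- escape_speed * tau) by (unfold tau; field; lra).
    apply Rmult_le_compat_r; lra. }
  pose proof (Hin t0 ltac:(unfold t1; lra)). pose proof (Hin t1 ltac:(unfold t1; lra)).
  destruct (Hsg t0 ltac:(unfold t1; lra)) as [_ Habs].
  unfold sg in Hd. destruct (Rlt_dec 0 (sin (theta i t0))); lra.
Qed.

Lemma cos_theta_top_after_tau i t0 : (i < N)%nat -> 0 <= t0 -> -1 + mu <= cos (theta i t0) ->
  forall t, t0 + tau <= t -> 1 - mu <= cos (theta i t).
Proof.
  intros Hi Ht0 Hc t Ht. destruct (cos_theta_reaches_top i t0 Hi Ht0 Hc) as [u [Hu Hcu]].
  apply (cos_theta_ge_persists i u); auto; lra.
Qed.

Lemma theta_eventually_near_2kPI i t0 : (i < N)%nat -> 0 <= t0 -> -1 + mu <= cos (theta i t0) ->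
  exists k : Z, forall t, t0 + tau <= t ->
    -(PI / 2) < theta i t - 2 * IZR k * PI < PI / 2 /\ 1 - mu <= cos (theta i t - 2 * IZR k * PI).
Proof.
  intros Hi Ht0 Hc. pose proof tau_gt0.
  pose proof (cos_theta_top_after_tau i t0 Hi Ht0 Hc) as Htop.
  destruct (cos_gt0_arc (theta i (t0 + tau))) as [k Hk]; [pose proof (Htop (t0 + tau)); lra|].
  exists k. intros t Ht. rewrite cos_sub_2kPI. split; [|apply Htop; lra].
  enough (2 * IZR k * PI - PI / 2 < theta i t < 2 * IZR k * PI + PI / 2) by lra.
  apply (stays_between (theta i) (t0 + tau) t (t0 + tau)); [lra | | exact Hk | | lra].
  - intros x Hx; apply theta_continuity; auto; lra.
  - intros x Hx. pose proof (Htop x ltac:(lra)) as Hcx.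
    split; intros E; rewrite E in Hcx;
      [rewrite cos_2kPI_sub_PI2 in Hcx | rewrite cos_2kPI_add_PI2 in Hcx]; lra.
Qed.

Definition lock_rate := kappa * (Rt 0 - mu) * (1 - mu).

Lemma coupling_sin_diff_bounds a b r :
  -(PI / 2) < a < PI / 2 -> -(PI / 2) < b < PI / 2 -> 1 - mu <= cos a -> 1 - mu <= cos b ->
  Rt 0 - mu <= r <= 2 -> b <= a ->
  lock_rate * (a - b) <= kappa * r * (sin a - sin b) <= 2 * kappa * (a - b).
Proof.
  intros Ha Hb Hca Hcb Hr Hba. pose proof kappa_gt0.
  destruct (sin_diff_bounds a b (1 - mu) Ha Hb Hca Hcb Hba) as [Hlo Hhi].
  assert (Hpos : 0 <= (1 - mu) * (a - b)) by nra.
  unfold lock_rate. rewrite !Rmult_assoc. split.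
  - apply Rmult_le_compat_l; [lra|]. apply Rmult_le_compat; lra.
  - replace (2 * (kappa * (a - b))) with (kappa * (2 * (a - b))) by ring.
    apply Rmult_le_compat_l; [lra|]. apply Rmult_le_compat; lra.
Qed.

Definition phase_gap i j (k : Z) t := theta i t - theta j t + 2 * IZR k * PI.
Definition phase_gap_vel i j t := phase_vel i t - phase_vel j t.

Lemma phase_gap_dynamics i j t0 : (i < N)%nat -> (j < N)%nat -> 0 <= t0 ->
  -1 + mu <= cos (theta i t0) -> -1 + mu <= cos (theta j t0) ->
  exists k : Z, let D := phase_gap i j k in let dD := phase_gap_vel i j in
    -PI < D (t0 + tau) < PI /\
    (forall t, t0 + tau <= t ->
       is_derive D t (dD t) /\
       (0 <= D t ->
          omega i - omega j - 2 * kappa * D t <= dD t <= omega i - omega j - lock_rate * D t) /\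
       (D t <= 0 -> omega i - omega j - lock_rate * D t <= dD t)).
Proof.
  intros Hi Hj Ht0 Hci Hcj. pose proof tau_gt0.
  destruct (theta_eventually_near_2kPI i t0 Hi Ht0 Hci) as [ki Hki].
  destruct (theta_eventually_near_2kPI j t0 Hj Ht0 Hcj) as [kj Hkj].
  exists (kj - ki)%Z. intros D dD.
  assert (HD : forall t, D t = (theta i t - 2 * IZR ki * PI) - (theta j t - 2 * IZR kj * PI))
    by (intros; unfold D, phase_gap; rewrite minus_IZR; ring).
  split; [rewrite HD; destruct (Hki (t0 + tau)), (Hkj (t0 + tau)); lra | ].
  intros t Ht. destruct (Hki t Ht) as [Ha Hca]. destruct (Hkj t Ht) as [Hb Hcb].
  assert (HR : Rt 0 - mu <= Rt t <= 2)
    by (split; [apply order_param_ge; lra | apply order_param_bounds]).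
  assert (HdD : dD t = omega i - omega j - kappa * Rt t *
                 (sin (theta i t - 2 * IZR ki * PI) - sin (theta j t - 2 * IZR kj * PI)))
    by (unfold dD, phase_gap_vel, phase_vel; rewrite !sin_sub_2kPI; ring).
  split; [| split; intros HD0; rewrite HdD, HD in *].
  - unfold D, dD, phase_gap, phase_gap_vel. apply is_derive_Reals.
    rewrite <- (Rplus_0_r (phase_vel i t - phase_vel j t)).
    apply (derivable_pt_lim_plus (fun t => theta i t - theta j t) (fun _ => 2 * IZR (kj - ki) * PI));
      [| apply derivable_pt_lim_const].
    apply (derivable_pt_lim_minus (theta i) (theta j)); apply is_derive_Reals, theta_derive; auto; lra.
  - pose proof (coupling_sin_diff_bounds _ _ _ Ha Hb Hca Hcb HR ltac:(lra)). lra.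
  - pose proof (coupling_sin_diff_bounds _ _ _ Hb Ha Hcb Hca HR ltac:(lra)). lra.
Qed.

Lemma phase_gap_estimates i j t0 : (i < N)%nat -> (j < N)%nat -> 0 <= t0 ->
  cos (theta i t0) >= -1 + mu -> cos (theta j t0) >= -1 + mu ->
  (omega i > omega j ->
     exists k : Z,
       (forall t, t >= t0 + tau ->
          theta i t - theta j t + 2 * IZR k * PI
            <= (omega i - omega j) / lock_rate + PI * exp (- lock_rate * (t - t0 - tau))) /\
       (forall t, t >= t0 + tau + PI / (omega i - omega j) ->
          theta i t - theta j t + 2 * IZR k * PI
            >= (omega i - omega j) / (2 * kappa)
               - (omega i - omega j) / (2 * kappa)
                 * exp (- 2 * kappa * (t - t0 - tau - PI / (omega i - omega j))))) /\
  (omega i = omega j ->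
     exists k : Z, forall t, t >= t0 + tau ->
       Rabs (theta i t - theta j t + 2 * IZR k * PI) <= PI * exp (- lock_rate * (t - t0 - tau))).
Proof.
  intros Hi Hj Ht0 Hci Hcj.
  destruct (phase_gap_dynamics i j t0 Hi Hj Ht0 ltac:(lra) ltac:(lra)) as [k [Hinit Hdyn]].
  assert (Hlam : 0 < lock_rate).
  { pose proof kappa_gt0. unfold lock_rate. apply Rmult_lt_0_compat; [apply Rmult_lt_0_compat|]; lra. }
  pose proof kappa_gt0.
  assert (HD : forall t, t0 + tau <= t -> is_derive (phase_gap i j k) t (phase_gap_vel i j t))
    by (intros t Ht; apply Hdyn, Ht).
  split; intros Homega; exists k.
  - split; intros t Ht; replace (t - t0 - tau) with (t - (t0 + tau)) by ring.
    + apply (gap_upper_bound (phase_gap i j k) (phase_gap_vel i j) (t0 + tau)); try lra; auto.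
      intros x Hx HDx. apply Hdyn; auto.
    + replace (- 2 * kappa * (t - (t0 + tau) - PI / (omega i - omega j)))
        with (- (2 * kappa) * (t - (t0 + tau + PI / (omega i - omega j)))) by ring.
      apply Rle_ge, (gap_lower_bound (phase_gap i j k) (phase_gap_vel i j) (t0 + tau) _ HD lock_rate);
        try lra; intros x Hx HDx; apply Hdyn; auto.
  - rewrite <- Homega, Rminus_diag in Hdyn.
    assert (Hup : forall t, t0 + tau <= t ->
              phase_gap i j k t <= 0 / lock_rate + PI * exp (- lock_rate * (t - (t0 + tau))))
      by (apply (gap_upper_bound _ (phase_gap_vel i j)); try lra; auto;
          intros x Hx HDx; pose proof (proj1 (proj2 (Hdyn x Hx)) HDx); lra).
    assert (Hlo : forall t, t0 + tau <= t ->
              - phase_gap i j k t <= 0 / lock_rate + PI * exp (- lock_rate * (t - (t0 + tau))))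
      by (apply (gap_upper_bound _ (fun x => - phase_gap_vel i j x)); try lra;
          [intros x Hx; apply (is_derive_opp (phase_gap i j k)), HD, Hx |
           intros x Hx HDx; pose proof (proj2 (proj2 (Hdyn x Hx)) ltac:(lra)); lra]).
    intros t Ht. replace (t - t0 - tau) with (t - (t0 + tau)) by ring.
    specialize (Hup t ltac:(lra)). specialize (Hlo t ltac:(lra)).
    rewrite Rdiv_0_l in *. unfold phase_gap in *. apply Rabs_le; lra.
Qed.

Lemma enters_band_or_stays_below i :
  (exists t0, 0 <= t0 /\ -1 + mu <= cos (theta i t0)) \/ (forall t, 0 <= t -> cos (theta i t) < -1 + mu).
Proof.
  destruct (classic (exists t0, 0 <= t0 /\ -1 + mu <= cos (theta i t0))) as [Hin | Hnever];
    [left; exact Hin | right].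
  intros t Ht. apply Rnot_le_lt; intros Hle. apply Hnever; eauto.
Qed.

Lemma theta_confined_never_entering i : (i < N)%nat ->
  (forall t, 0 <= t -> cos (theta i t) < -1 + mu) ->
  exists k : Z, forall t, 0 <= t -> 2 * IZR k * PI + PI / 2 < theta i t < 2 * IZR k * PI + 3 * (PI / 2).
Proof.
  intros Hi Hbelow.
  destruct (cos_lt0_arc (theta i 0)) as [k Hk]; [pose proof (Hbelow 0 (Rle_refl 0)); lra|].
  exists k. intros t Ht. apply (stays_between (theta i) 0 t 0); [lra | | exact Hk | | lra].
  - intros x Hx; apply theta_continuity; auto; lra.
  - intros x Hx. pose proof (Hbelow x ltac:(lra)) as Hcx.
    split; intros E; rewrite E in Hcx;
      [rewrite cos_2kPI_add_PI2 in Hcx | rewrite cos_2kPI_add_3PI2 in Hcx]; lra.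
Qed.

Lemma theta_confined_after_entry i t0 : (i < N)%nat -> 0 <= t0 -> -1 + mu <= cos (theta i t0) ->
  exists k : Z, forall t, t0 <= t -> 2 * IZR k * PI - PI < theta i t < 2 * IZR k * PI + PI.
Proof.
  intros Hi Ht0 Hc.
  destruct (cos_gtN1_arc (theta i t0)) as [k Hk]; [lra|].
  exists k. intros t Ht. apply (stays_between (theta i) t0 t t0); [lra | | exact Hk | | lra].
  - intros x Hx; apply theta_continuity; auto; lra.
  - intros x Hx.
    pose proof (cos_theta_ge_persists i t0 (-1 + mu) Hi Ht0 ltac:(lra) Hc x ltac:(lra)) as Hcx.
    split; intros E; rewrite E in Hcx;
      [rewrite cos_2kPI_sub_PI in Hcx | rewrite cos_2kPI_add_PI in Hcx]; lra.
Qed.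

Lemma first_entry_time i t0 : (i < N)%nat -> 0 <= t0 -> -1 + mu <= cos (theta i t0) ->
  exists tst, 0 <= tst /\ -1 + mu <= cos (theta i tst) /\
    (0 < tst -> cos (theta i tst) = -1 + mu) /\
    forall t, 0 <= t < tst -> cos (theta i t) < -1 + mu.
Proof.
  intros Hi Ht0 Hc.
  destruct (Rle_dec (-1 + mu) (cos (theta i 0))) as [H0|H0].
  { exists 0. repeat split; [lra | exact H0 | intros; lra | intros; lra]. }
  destruct (first_level_crossing (fun x => cos (theta i x)) 0 t0 (-1 + mu)) as [c [Hc1 [Hc2 Hc3]]];
    [lra | intros x Hx; apply cos_theta_continuity; auto; lra | lra | exact Hc |].
  exists c. repeat split; [lra | lra | auto | exact Hc3].
Qed.

Lemma theta_confined_before_entry i tst k : (i < N)%nat -> 0 < tst ->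
  cos (theta i tst) = -1 + mu -> (forall t, 0 <= t < tst -> cos (theta i t) < -1 + mu) ->
  2 * IZR k * PI - PI < theta i tst < 2 * IZR k * PI + PI ->
  (forall t, 0 <= t <= tst -> 2 * IZR k * PI + PI / 2 < theta i t < 2 * IZR k * PI + 3 * (PI / 2)) \/
  (forall t, 0 <= t <= tst -> 2 * IZR k * PI - 3 * (PI / 2) < theta i t < 2 * IZR k * PI - PI / 2).
Proof.
  intros Hi Htst Hc Hbefore Hk.
  assert (Hneg : forall t, 0 <= t <= tst -> cos (theta i t) < 0).
  { intros t Ht. destruct (Rle_lt_or_eq_dec _ _ (proj2 Ht)) as [Hlt | ->]; [|lra].
    pose proof (Hbefore t ltac:(lra)). lra. }
  assert (Hcont : forall t, 0 <= t <= tst -> continuity_pt (theta i) t)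
    by (intros; apply theta_continuity; auto; lra).
  pose proof (Hneg tst ltac:(lra)) as Hntst. rewrite <- (cos_sub_2kPI k) in Hntst.
  pose proof PI_RGT_0.
  destruct (Rle_dec (2 * IZR k * PI) (theta i tst)); [left | right];
    intros t Ht; apply (stays_between (theta i) 0 tst tst); auto; [lra | | | lra | | ].
  - split; [apply Rnot_le_lt; intros Hle | lra].
    assert (0 <= cos (theta i tst - 2 * IZR k * PI)) by (apply cos_ge_0; lra). lra.
  - intros x Hx. pose proof (Hneg x Hx) as Hcx.
    split; intros E; rewrite E in Hcx;
      [rewrite cos_2kPI_add_PI2 in Hcx | rewrite cos_2kPI_add_3PI2 in Hcx]; lra.
  - split; [lra | apply Rnot_le_lt; intros Hle].
    assert (0 <= cos (theta i tst - 2 * IZR k * PI)) by (apply cos_ge_0; lra). lra.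
  - intros x Hx. pose proof (Hneg x Hx) as Hcx.
    split; intros E; rewrite E in Hcx;
      [rewrite cos_2kPI_sub_3PI2 in Hcx | rewrite cos_2kPI_sub_PI2 in Hcx]; lra.
Qed.

(* Before entering the band [theta_i] lies in an arc where [cos < -1 + mu]; comparing [cos] values
   with the later arc [(2kPI - PI, 2kPI + PI)] keeps every two values less than [2PI] apart. *)
Lemma theta_range_lt_2PI i : (i < N)%nat ->
  exists a b, b - a < 2 * PI /\ forall t, 0 <= t -> a <= theta i t <= b.
Proof.
  intros Hi. pose proof PI_RGT_0. pose proof tau_gt0.
  destruct (enters_band_or_stays_below i) as [[t0 [Ht0 Hc0]] | Hnever].
  2:{ destruct (theta_confined_never_entering i Hi Hnever) as [k Hk].
      exists (2 * IZR k * PI + PI / 2), (2 * IZR k * PI + 3 * (PI / 2)). split; [lra|].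
      intros t Ht. pose proof (Hk t Ht). lra. }
  destruct (first_entry_time i t0 Hi Ht0 Hc0) as [tst [Htst [Hctst [Hedge Hbefore]]]].
  destruct (theta_confined_after_entry i tst Hi Htst Hctst) as [k Hafter].
  set (K := 2 * IZR k * PI) in *.
  assert (Hpre : 0 < tst ->
     (forall t, 0 <= t <= tst -> K + PI / 2 < theta i t < K + 3 * (PI / 2)) \/
     (forall t, 0 <= t <= tst -> K - 3 * (PI / 2) < theta i t < K - PI / 2))
    by (intros Hpos; apply theta_confined_before_entry; auto; apply Hafter; lra).
  assert (Hcmp : forall x y, 0 <= x < tst -> tst <= y -> Rabs (theta i x - theta i y) < 2 * PI).
  { intros x y Hx Hy.
    assert (Hcos : cos (theta i x) < cos (theta i y)).
    { pose proof (Hbefore x Hx). pose proof (cos_theta_ge_persists i tst (-1 + mu) Hi Htst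
        ltac:(lra) Hctst y Hy). lra. }
    pose proof (Hafter y Hy).
    destruct (Hpre ltac:(lra)) as [Hl | Hr].
    - apply (cos_lt_gap_lt_2PI k); auto. apply Hl; lra.
    - rewrite <- Rabs_Ropp, <- (cos_neg (theta i x)), <- (cos_neg (theta i y)) in *.
      replace (- (theta i x - theta i y)) with (- theta i x - - theta i y) by ring.
      apply (cos_lt_gap_lt_2PI (- k)); auto; rewrite opp_IZR; [pose proof (Hr x ltac:(lra)) | ];
        unfold K in *; lra. }
  apply (range_lt_2PI_of_tail (theta i) (tst + tau) K); [lra | | | |].
  - intros t Ht; apply theta_continuity; auto; lra.
  - intros t Ht. apply cos_gt0_in_arc; [apply Hafter; lra|].
    pose proof (cos_theta_top_after_tau i tst Hi Htst Hctst t Ht). lra.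
  - intros t Ht. destruct (Rlt_dec t tst) as [Hlt | Hge]; [|pose proof (Hafter t ltac:(lra)); lra].
    destruct (Hpre ltac:(lra)) as [Hl | Hr];
      [pose proof (Hl t ltac:(lra)) | pose proof (Hr t ltac:(lra))]; lra.
  - intros t t' Ht Ht'. apply (Rle_lt_trans _ (Rabs (theta i t - theta i t'))); [apply Rle_abs|].
    destruct (Rlt_dec t tst) as [Hlt | Hge], (Rlt_dec t' tst) as [Hlt' | Hge'].
    + destruct (Hpre ltac:(lra)) as [Hl | Hr];
        [pose proof (Hl t ltac:(lra)); pose proof (Hl t' ltac:(lra))
        | pose proof (Hr t ltac:(lra)); pose proof (Hr t' ltac:(lra))]; apply Rabs_def1; lra.
    + apply Hcmp; lra.
    + rewrite Rabs_minus_sym. apply Hcmp; lra.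
    + pose proof (Hafter t ltac:(lra)). pose proof (Hafter t' ltac:(lra)). apply Rabs_def1; lra.
Qed.

Lemma theta_bounded : exists B, forall i, (i < N)%nat -> forall t, 0 <= t -> Rabs (theta i t) <= B.
Proof.
  apply (ex_common_threshold (fun i B => forall t, 0 <= t -> Rabs (theta i t) <= B)).
  - intros i B B' HB H t Ht. specialize (H t Ht). lra.
  - intros i Hi. destruct (theta_range_lt_2PI i Hi) as [a [b [_ Hab]]].
    exists (Rmax (Rabs a) (Rabs b)). intros t Ht. destruct (Hab t Ht).
    pose proof (Rle_abs b). pose proof (Rle_abs (- a)) as Ha. rewrite Rabs_Ropp in Ha.
    pose proof (Rmax_l (Rabs a) (Rabs b)). pose proof (Rmax_r (Rabs a) (Rabs b)).
    apply Rabs_le. lra.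
Qed.

Definition vel_bound := W + 2 * kappa.

Lemma Rabs_phase_vel_le i t : (i < N)%nat -> Rabs (phase_vel i t) <= vel_bound.
Proof.
  intros Hi. unfold phase_vel, vel_bound.
  pose proof (Rabs_omega_le i Hi). pose proof (order_param_bounds t). pose proof kappa_gt0.
  pose proof (SIN_bound (theta i t)).
  assert (Rabs (kappa * Rt t * sin (theta i t)) <= 2 * kappa).
  { rewrite !Rabs_mult, (Rabs_right kappa), (Rabs_right (Rt t)) by lra.
    assert (Rabs (sin (theta i t)) <= 1) by (apply Rabs_le; lra).
    assert (0 <= kappa * Rt t) by nra. nra. }
  eapply Rle_trans; [apply Rabs_triang | rewrite Rabs_Ropp; lra].
Qed.

Lemma theta_lipschitz i t t' : (i < N)%nat -> 0 <= t <= t' ->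
  Rabs (theta i t' - theta i t) <= vel_bound * (t' - t).
Proof.
  intros Hi Ht. apply (derive_bound_increment (theta i) (phase_vel i)); [lra | |].
  - intros; apply theta_derive; auto; lra.
  - intros; apply Rabs_phase_vel_le; auto.
Qed.

Lemma order_param_lipschitz t t' : 0 <= t <= t' -> Rabs (Rt t' - Rt t) <= vel_bound * (t' - t).
Proof.
  intros Ht.
  apply (derive_bound_increment Rt order_param_vel); [lra | intros; apply order_param_derive; lra |].
  intros u Hu. unfold order_param_vel. apply mean_abs_le; [lia|]. intros i Hi.
  rewrite Rabs_mult, Rabs_Ropp. pose proof (Rabs_phase_vel_le i u Hi).
  assert (Rabs (sin (theta i u)) <= 1) by (apply Rabs_le, SIN_bound).
  pose proof (Rabs_pos (sin (theta i u))). pose proof (Rabs_pos (phase_vel i u)). nra.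
Qed.

Lemma phase_vel_lipschitz i t t' : (i < N)%nat -> 0 <= t <= t' ->
  Rabs (phase_vel i t' - phase_vel i t) <= 3 * kappa * vel_bound * (t' - t).
Proof.
  intros Hi Ht. unfold phase_vel. pose proof kappa_gt0. pose proof (order_param_bounds t).
  replace (omega i - kappa * Rt t' * sin (theta i t') - (omega i - kappa * Rt t * sin (theta i t)))
    with (- kappa * ((Rt t' - Rt t) * sin (theta i t') + Rt t * (sin (theta i t') - sin (theta i t))))
    by ring.
  rewrite Rabs_mult, Rabs_Ropp, Rabs_right by lra.
  replace (3 * kappa * vel_bound * (t' - t))
    with (kappa * (vel_bound * (t' - t) + 2 * (vel_bound * (t' - t)))) by ring.
  apply Rmult_le_compat_l; [lra|].
  eapply Rle_trans; [apply Rabs_triang|]. rewrite !Rabs_mult, (Rabs_right (Rt t)) by lra.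
  pose proof (order_param_lipschitz t t' Ht). pose proof (Rabs_pos (Rt t' - Rt t)).
  assert (Rabs (sin (theta i t')) <= 1) by (apply Rabs_le, SIN_bound).
  pose proof (Rabs_pos (sin (theta i t'))).
  pose proof (Rle_trans _ _ _ (sin_lipschitz (theta i t') (theta i t)) (theta_lipschitz i t t' Hi Ht)).
  pose proof (Rabs_pos (sin (theta i t') - sin (theta i t))).
  apply Rplus_le_compat; nra.
Qed.

(* The system is a gradient flow: [potential' = - sum_i phase_vel_i ^ 2]. *)
Definition potential t := - sumN N (fun i => omega i * theta i t) - kappa * INR N / 2 * (Rt t * Rt t).

Lemma potential_derive t : 0 <= t ->
  is_derive potential t (- sumN N (fun i => phase_vel i t * phase_vel i t)).
Proof.
  intros Ht. pose proof INR_N_pos.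
  assert (HA : is_derive (fun x => sumN N (fun i => omega i * theta i x)) t
                 (sumN N (fun i => omega i * phase_vel i t))).
  { apply (is_derive_sumN N (fun i x => omega i * theta i x)). intros i Hi.
    apply (is_derive_scal (theta i)), theta_derive; auto. }
  assert (HR := order_param_derive t Ht).
  replace (- sumN N (fun i => phase_vel i t * phase_vel i t))
    with (- sumN N (fun i => omega i * phase_vel i t)
          - kappa * INR N / 2 * (order_param_vel t * Rt t + Rt t * order_param_vel t)).
  - unfold potential. apply (is_derive_minus (fun x => - sumN N (fun i => omega i * theta i x))).
    + apply (is_derive_opp (fun x => sumN N (fun i => omega i * theta i x))), HA.
    + apply (is_derive_scal (fun x => Rt x * Rt x)), (is_derive_mult Rt Rt); [exact HR | exact HR |].
      intros; apply Rmult_comm.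
  - rewrite (sumN_ext N (fun i => phase_vel i t * phase_vel i t)
      (fun i => omega i * phase_vel i t + kappa * Rt t * (- sin (theta i t) * phase_vel i t)))
      by (intros i Hi; unfold phase_vel at 1; ring).
    rewrite sumN_plus, sumN_scal. unfold order_param_vel. field. lra.
Qed.

Lemma potential_lower_bound : exists Vm, forall t, 0 <= t -> Vm <= potential t.
Proof.
  destruct theta_bounded as [B HB]. pose proof INR_N_pos. pose proof kappa_gt0.
  exists (- (INR N * (W * B)) - kappa * INR N / 2 * 4).
  intros t Ht. unfold potential.
  assert (sumN N (fun i => omega i * theta i t) <= INR N * (W * B)).
  { rewrite <- sumN_const. apply sumN_le. intros i Hi.
    eapply Rle_trans; [apply Rle_abs|]. rewrite Rabs_mult.
    apply Rmult_le_compat; [apply Rabs_pos | apply Rabs_pos | apply Rabs_omega_le | apply HB]; auto. }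
  pose proof (order_param_bounds t).
  assert (kappa * INR N / 2 * (Rt t * Rt t) <= kappa * INR N / 2 * 4)
    by (apply Rmult_le_compat_l; [apply Rmult_le_pos; nra | nra]).
  lra.
Qed.

Lemma phase_vel_to_0 i : (i < N)%nat -> is_lim (phase_vel i) p_infty 0.
Proof.
  intros Hi. destruct potential_lower_bound as [Vm HVm].
  pose proof kappa_gt0. pose proof W_ge0.
  apply (is_lim_zero_of_dissipation potential
           (fun t => - sumN N (fun j => phase_vel j t * phase_vel j t))
           (phase_vel i) (3 * kappa * vel_bound) Vm).
  - exact potential_derive.
  - intros t Ht.
    enough (phase_vel i t * phase_vel i t <= sumN N (fun j => phase_vel j t * phase_vel j t)) by lra.
    apply (sumN_ge_term N (fun j => phase_vel j t * phase_vel j t)); auto. intros; nra.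
  - exact HVm.
  - unfold vel_bound. apply Rmult_lt_0_compat; lra.
  - intros; apply phase_vel_lipschitz; auto.
Qed.

Lemma Rabs_omega_ratio_lt i r : (i < N)%nat -> Rt 0 - mu <= r ->
  Rabs (omega i / (kappa * r)) < sin_floor.
Proof.
  intros Hi Hr. pose proof kappa_gt0. pose proof sin_floor_gt0. pose proof (Rabs_omega_le i Hi).
  assert (Hkr : 0 < kappa * r) by (apply Rmult_lt_0_compat; lra).
  assert (kappa * (Rt 0 - mu) * sin_floor <= kappa * r * sin_floor)
    by (apply Rmult_le_compat_r; [lra | apply Rmult_le_compat_l; lra]).
  unfold Rdiv. rewrite Rabs_mult, Rabs_inv, (Rabs_right (kappa * r)) by lra.
  apply (Rmult_lt_reg_r (kappa * r)); [exact Hkr|].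
  rewrite Rmult_assoc, Rinv_l, Rmult_1_r by lra. lra.
Qed.

Lemma omega_ratio_sqr_lt i r : (i < N)%nat -> Rt 0 - mu <= r ->
  (omega i / (kappa * r)) ^ 2 < sin_floor * sin_floor.
Proof.
  intros Hi Hr. pose proof (Rabs_omega_ratio_lt i r Hi Hr).
  rewrite <- Rsqr_pow2, Rsqr_abs. pose proof (Rabs_pos (omega i / (kappa * r))). unfold Rsqr. nra.
Qed.

Lemma sin_theta_eq i t : (i < N)%nat -> 0 <= t ->
  sin (theta i t) = (omega i - phase_vel i t) / (kappa * Rt t).
Proof.
  intros Hi Ht. pose proof (order_param_ge t Ht). pose proof kappa_gt0.
  unfold phase_vel. field. split; lra.
Qed.

Lemma eventual_branches : exists T, 0 <= T /\ forall i, (i < N)%nat ->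
  (forall t, T <= t -> 1 - mu <= cos (theta i t)) \/ (forall t, 0 <= t -> cos (theta i t) < -1 + mu).
Proof.
  destruct (ex_common_threshold (fun i T => 0 <= T /\ ((forall t, T <= t -> 1 - mu <= cos (theta i t)) \/
                                 (forall t, 0 <= t -> cos (theta i t) < -1 + mu))) N) as [T HT].
  - intros i B B' HB [H0 [HA | HB']]; split; [lra | left; intros; apply HA; lra | lra | right; auto].
  - intros i Hi. destruct (enters_band_or_stays_below i) as [[t0 [Ht0 Hc]] | Hnever].
    + exists (t0 + tau). pose proof tau_gt0. split; [lra | left].
      apply (cos_theta_top_after_tau i t0 Hi Ht0 Hc).
    + exists 0. split; [lra | right; exact Hnever].
  - exists T. split; [apply (HT 0%nat); lia | intros i Hi; apply HT; auto].
Qed.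

Lemma cos_theta_eventually_signed_sqrt : exists T (eps : nat -> R), 0 <= T /\
  forall i, (i < N)%nat -> forall t, T <= t -> cos (theta i t) = eps i * sqrt (1 - (sin (theta i t))²).
Proof.
  destruct eventual_branches as [T [HT Hbr]].
  exists T, (fun i => if Rle_dec 0 (cos (theta i T)) then 1 else -1).
  split; [exact HT|].
  intros i Hi t Ht. destruct (Hbr i Hi) as [HA | HB].
  - destruct (Rle_dec 0 (cos (theta i T))) as [_ | Hn]; [|pose proof (HA T (Rle_refl T)); lra].
    rewrite Rmult_1_l. apply Rtrigo_facts.cos_sin. pose proof (HA t Ht); lra.
  - destruct (Rle_dec 0 (cos (theta i T))) as [Hn | _]; [pose proof (HB T HT); lra|].
    replace (-1 * sqrt (1 - (sin (theta i t))²)) with (- sqrt (1 - (sin (theta i t))²)) by ring.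
    apply Rtrigo_facts.cos_sin_opp.
    pose proof (HB t ltac:(lra)); lra.
Qed.

Definition fixed_point_rhs (eps : nat -> R) r :=
  1 + / INR N * sumN N (fun i => eps i * sqrt (1 - (omega i / (kappa * r)) ^ 2)).

(* At a level [r] visited at arbitrarily late times, [sin theta_i -> omega_i / (kappa r)]
   pins every [cos theta_i], hence [R = r], to its value in the fixed-point equation. *)
Lemma order_param_recurrent_value T eps : 0 <= T ->
  (forall i, (i < N)%nat -> forall t, T <= t ->
     cos (theta i t) = eps i * sqrt (1 - (sin (theta i t))²)) ->
  forall r, Rt 0 - mu <= r -> (forall M, exists t, M <= t /\ Rt t = r) ->
  r = fixed_point_rhs eps r.
Proof.
  intros HT Hcos r Hr Hrec. pose proof INR_N_pos. pose proof kappa_gt0.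
  assert (Hkr : 0 < kappa * r) by (apply Rmult_lt_0_compat; lra).
  set (h := fun i y => eps i * sqrt (1 - ((omega i - y) / (kappa * r)) ^ 2)).
  set (g := fun t => 1 + / INR N * sumN N (fun i => h i (phase_vel i t))).
  apply (eq_lim_of_frequently g).
  - replace (fixed_point_rhs eps r) with (1 + / INR N * sumN N (fun i => h i 0))
      by (unfold fixed_point_rhs, h; do 2 f_equal; apply sumN_ext; intros; rewrite Rminus_0_r; auto).
    apply (is_lim_plus' (fun _ => 1)); [apply is_lim_const|].
    apply (is_lim_scal_l _ (/ INR N) p_infty (sumN N (fun i => h i 0))).
    apply (is_lim_sumN N (fun i t => h i (phase_vel i t))). intros i Hi.
    apply (is_lim_comp_continuity_pt (phase_vel i) (h i) 0); [apply phase_vel_to_0, Hi|].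
    pose proof (omega_ratio_sqr_lt i r Hi Hr). pose proof sin_floor_lt1. pose proof sin_floor_gt0.
    apply continuity_pt_filterlim, (ex_derive_continuous (h i) 0). unfold h. auto_derive.
    replace ((omega i - 0) / (kappa * r) * ((omega i - 0) / (kappa * r) * 1))
      with ((omega i / (kappa * r)) ^ 2) by (unfold Rdiv; ring). nra.
  - intros M. destruct (Hrec (Rmax M T)) as [t [Ht Hrt]].
    assert (HtT : T <= t) by (eapply Rle_trans; [apply Rmax_r | exact Ht]).
    exists t. split; [eapply Rle_trans; [apply Rmax_l | exact Ht]|].
    symmetry. rewrite <- Hrt at 1. unfold g, order_param. rewrite sumN_plus, sumN_const.
    rewrite Rmult_plus_distr_l, <- Rmult_assoc, Rinv_l, Rmult_1_r by lra. f_equal. f_equal.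
    apply sumN_ext. intros i Hi. unfold h.
    rewrite (Hcos i Hi t HtT), (sin_theta_eq i t Hi ltac:(lra)), Hrt, Rsqr_pow2. reflexivity.
Qed.

(* Multiplying by [N r] and substituting [v = r^2] turns the equation into
   [N sqrt v + sum_i eps_i sqrt (v - (omega_i / kappa)^2) = N v]. *)
Lemma fixed_point_eq_not_on_interval eps li ls : Rt 0 - mu <= li < ls ->
  ~ (forall r, li < r < ls -> r = fixed_point_rhs eps r).
Proof.
  intros Hl Hfp. pose proof INR_N_pos. pose proof kappa_gt0. pose proof sin_floor_lt1.
  pose proof sin_floor_gt0.
  assert (Hli : 0 < li) by lra.
  set (a := fun i => (omega i / kappa) ^ 2).
  apply (wsum_sqrt_not_linear ((INR N, 0) :: map (fun i => (eps i, a i)) (seq 0 N))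
           (INR N) (li * li) (ls * ls)); [nra | nra | lra | |].
  - intros ca [<- | Hca]; [simpl; nra|].
    apply in_map_iff in Hca. destruct Hca as [i [<- Hi]]. apply in_seq in Hi. simpl.
    pose proof (omega_ratio_sqr_lt i li ltac:(lia) ltac:(lra)) as Hrat.
    unfold a. replace ((omega i / kappa) ^ 2) with ((omega i / (kappa * li)) ^ 2 * (li * li))
      by (field; lra).
    assert (0 < li * li) by nra. assert (sin_floor * sin_floor < 1) by nra. nra.
  - intros v Hv. set (r := sqrt v).
    assert (Hrr : r * r = v) by (apply sqrt_sqrt; nra).
    assert (Hr0 : 0 < r) by (apply sqrt_lt_R0; nra).
    assert (Hrange : li < r < ls) by (split; apply Rnot_le_lt; intros; nra).
    pose proof (Hfp r Hrange) as Hrec. unfold fixed_point_rhs in Hrec.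
    simpl wsum. rewrite wsum_map_seq. simpl fst. simpl snd. rewrite Rminus_0_r. fold r.
    rewrite (sumN_ext N (fun i => eps i * sqrt (v - a i))
               (fun i => r * (eps i * sqrt (1 - (omega i / (kappa * r)) ^ 2)))).
    2:{ intros i Hi. unfold a.
        replace (v - (omega i / kappa) ^ 2) with ((r * r) * (1 - (omega i / (kappa * r)) ^ 2))
          by (rewrite <- Hrr; field; lra).
        pose proof (omega_ratio_sqr_lt i r ltac:(lia) ltac:(lra)).
        rewrite sqrt_mult_alt, sqrt_square by nra. ring. }
    rewrite sumN_scal, <- Hrr.
    replace (sumN N (fun i => eps i * sqrt (1 - (omega i / (kappa * r)) ^ 2))) with (INR N * (r - 1));
      [ring|].
    apply (Rmult_eq_reg_l (/ INR N)); [|apply Rinv_neq_0_compat; lra].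
    rewrite <- Rmult_assoc, Rinv_l, Rmult_1_l by lra. lra.
Qed.

(* If [liminf R(n) < limsup R(n)], every level in between is visited at arbitrarily late times
   and would solve the fixed-point equation on a whole interval. *)
Lemma order_param_seq_converges :
  exists Rinf : R, is_lim_seq (fun n => Rt (INR n)) Rinf /\ Rt 0 - mu <= Rinf.
Proof.
  destruct cos_theta_eventually_signed_sqrt as [T [eps [HT Hcos]]].
  set (u := fun n => Rt (INR n)).
  assert (Hu : forall n, Rt 0 - mu <= u n <= 2)
    by (intros n; split; [apply order_param_ge, pos_INR | apply order_param_bounds]).
  destruct (ex_LimSup_seq u) as [ls Hls]. destruct (ex_LimInf_seq u) as [li Hli].
  pose proof (is_LimSup_LimInf_seq_le u ls li Hls Hli) as Hle.
  destruct ls as [ls | |].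
  2:{ destruct (Hls 2 0%nat) as [n [_ Hn]]. pose proof (Hu n). lra. }
  2:{ destruct (Hls 0) as [N0 HN0]. pose proof (HN0 N0 (le_n _)). pose proof (Hu N0). lra. }
  destruct li as [li | |].
  2:{ destruct (Hli 2) as [N0 HN0]. pose proof (HN0 N0 (le_n _)). pose proof (Hu N0). lra. }
  2:{ destruct (Hli 0 0%nat) as [n [_ Hn]]. pose proof (Hu n). lra. }
  simpl in Hle.
  assert (Hli0 : Rt 0 - mu <= li).
  { apply Rnot_lt_le; intros Hlt.
    destruct (proj1 (Hli (mkposreal _ (proj2 (Rlt_0_minus _ _) Hlt))) 0%nat) as [n [_ Hn]].
    simpl in Hn. pose proof (Hu n). lra. }
  destruct (Req_dec li ls) as [Heq | Hne].
  { exists li. split; [apply is_LimSup_LimInf_lim_seq; [rewrite Heq |]; auto | exact Hli0]. }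
  exfalso. apply (fixed_point_eq_not_on_interval eps li ls); [lra|].
  intros r Hr. apply (order_param_recurrent_value T eps HT Hcos r); [lra|].
  intros M. destruct (INR_archimed 1 (Rmax M 0)) as [N0 HN0]; [lra|].
  pose proof (Rmax_l M 0). pose proof (Rmax_r M 0).
  destruct (proj1 (Hls (mkposreal _ (proj2 (Rlt_0_minus _ _) (proj2 Hr)))) N0) as [n1 [Hn1 Hu1]].
  destruct (proj1 (Hli (mkposreal _ (proj2 (Rlt_0_minus _ _) (proj1 Hr)))) N0) as [n2 [Hn2 Hu2]].
  simpl in Hu1, Hu2. apply le_INR in Hn1. apply le_INR in Hn2. unfold u in Hu1, Hu2.
  assert (Hcross : forall a b, 0 <= a -> M <= a <= b -> (Rt a - r) * (Rt b - r) <= 0 ->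
                     exists t, M <= t /\ Rt t = r).
  { intros a b Ha Hab Hs. destruct (intermediate_value Rt a b r) as [c [Hc Hrc]]; [lra | | exact Hs |].
    - intros; apply order_param_continuity; lra.
    - exists c; split; [lra | exact Hrc]. }
  destruct (Rle_dec (INR n1) (INR n2));
    [apply (Hcross (INR n1) (INR n2)) | apply (Hcross (INR n2) (INR n1))]; try lra; nra.
Qed.

Lemma order_param_vel_small e : 0 < e -> exists M, 0 <= M /\ forall t, M <= t ->
  Rabs (order_param_vel t) <= e.
Proof.
  intros He.
  destruct (ex_common_threshold (fun i M => 0 <= M /\ forall t, M <= t -> Rabs (phase_vel i t) < e) N)
    as [M HM].
  { intros i B B' HB [H0 H1]. split; [lra | intros; apply H1; lra]. }
  { intros i Hi. destruct (proj1 (is_lim_p_infty_eps _ _) (phase_vel_to_0 i Hi) e He) as [M HM].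
    exists (Rmax M 0). split; [apply Rmax_r|]. intros t Ht.
    rewrite <- (Rminus_0_r (phase_vel i t)). apply HM. eapply Rle_trans; [apply Rmax_l | exact Ht]. }
  exists M. split; [apply (HM 0%nat); lia|].
  intros t Ht. unfold order_param_vel. apply mean_abs_le; [lia|].
  intros i Hi. rewrite Rabs_mult, Rabs_Ropp. pose proof (proj2 (HM i Hi) t Ht).
  assert (Rabs (sin (theta i t)) <= 1) by (apply Rabs_le, SIN_bound).
  pose proof (Rabs_pos (sin (theta i t))). pose proof (Rabs_pos (phase_vel i t)). nra.
Qed.

Lemma order_param_converges : exists Rinf : R, is_lim Rt p_infty Rinf /\ Rt 0 - mu <= Rinf.
Proof.
  destruct order_param_seq_converges as [Rinf [Hseq HRinf]]. exists Rinf. split; [|exact HRinf].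
  apply is_lim_p_infty_eps. intros e He.
  apply is_lim_seq_spec in Hseq.
  destruct (Hseq (mkposreal (e / 2) ltac:(lra))) as [N1 HN1]. simpl in HN1.
  destruct (order_param_vel_small (e / 2)) as [M [HM0 HM]]; [lra|].
  exists (Rmax (INR N1) M + 1). intros t Ht.
  pose proof (Rmax_l (INR N1) M). pose proof (Rmax_r (INR N1) M). pose proof (pos_INR N1).
  destruct (Zfloor_bound t) as [Hf1 Hf2].
  assert (Hz : (0 <= Zfloor t)%Z) by (apply Zfloor_lub; simpl; lra).
  set (n := Z.to_nat (Zfloor t)).
  assert (Hn : INR n = IZR (Zfloor t)) by (unfold n; rewrite INR_IZR_INZ, Z2Nat.id; auto).
  specialize (HN1 n ltac:(apply INR_le; lra)).
  assert (Hlip : Rabs (Rt t - Rt (INR n)) <= e / 2 * (t - INR n)).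
  { apply (derive_bound_increment Rt order_param_vel);
      [lra | intros x Hx; apply order_param_derive; lra | intros x Hx; apply HM; lra]. }
  replace (Rt t - Rinf) with ((Rt t - Rt (INR n)) + (Rt (INR n) - Rinf)) by ring.
  eapply Rle_lt_trans; [apply Rabs_triang|]. nra.
Qed.

Section Limits.
Variable Rinf : R.
Hypothesis HRinf : is_lim Rt p_infty Rinf.
Hypothesis HRinf_ge : Rt 0 - mu <= Rinf.

Lemma sin_theta_lim i : (i < N)%nat ->
  is_lim (fun t => sin (theta i t)) p_infty (omega i / (kappa * Rinf)).
Proof.
  intros Hi. pose proof kappa_gt0.
  apply (is_lim_p_infty_ext (fun t => (omega i - phase_vel i t) / (kappa * Rt t)) _ _ 0);
    [intros t Ht; symmetry; apply sin_theta_eq; auto|].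
  replace (omega i / (kappa * Rinf)) with ((omega i - 0) / (kappa * Rinf)) by (rewrite Rminus_0_r; auto).
  apply (is_lim_div (fun t => omega i - phase_vel i t) (fun t => kappa * Rt t) p_infty
           (omega i - 0) (kappa * Rinf)); [| | intros E; injection E; nra | exact I].
  - apply (is_lim_minus' (fun _ => omega i)); [apply is_lim_const | apply phase_vel_to_0, Hi].
  - apply (is_lim_scal_l Rt kappa p_infty Rinf HRinf).
Qed.

Lemma omega_ratio_in_asin_domain i : (i < N)%nat -> -1 < omega i / (kappa * Rinf) < 1.
Proof.
  intros Hi. pose proof (Rabs_omega_ratio_lt i Rinf Hi HRinf_ge) as Hr. pose proof sin_floor_lt1.
  apply Rabs_def2 in Hr. lra.
Qed.

Lemma theta_lim_in_band i t0 : (i < N)%nat -> 0 <= t0 -> -1 + mu <= cos (theta i t0) ->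
  exists k : Z, is_lim (theta i) p_infty (asin (omega i / (kappa * Rinf)) + 2 * IZR k * PI).
Proof.
  intros Hi Ht0 Hc. destruct (theta_eventually_near_2kPI i t0 Hi Ht0 Hc) as [k Hk].
  exists k.
  apply (is_lim_p_infty_ext (fun t => asin (sin (theta i t)) + 2 * IZR k * PI) _ _ (t0 + tau)).
  { intros t Ht. destruct (Hk t Ht) as [Harc _].
    rewrite <- (sin_sub_2kPI k), asin_sin by lra. ring. }
  apply (is_lim_plus' _ (fun _ => 2 * IZR k * PI)); [|apply is_lim_const].
  apply (is_lim_comp_continuity_pt _ asin); [apply sin_theta_lim, Hi|].
  apply derivable_continuous_pt, derivable_pt_asin, omega_ratio_in_asin_domain, Hi.
Qed.

Lemma theta_lim_below_band i : (i < N)%nat -> (forall t, 0 <= t -> cos (theta i t) < -1 + mu) ->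
  exists k : Z, is_lim (theta i) p_infty (PI - asin (omega i / (kappa * Rinf)) + 2 * IZR k * PI).
Proof.
  intros Hi Hbelow. pose proof PI_RGT_0.
  destruct (theta_confined_never_entering i Hi Hbelow) as [k Hk]. exists k.
  apply (is_lim_p_infty_ext (fun t => PI - asin (sin (theta i t)) + 2 * IZR k * PI) _ _ 0).
  { intros t Ht. pose proof (Hk t Ht).
    (* [theta - 2kPI - PI] lies in [(-PI/2, PI/2)] and has sine [- sin theta] *)
    set (y := theta i t - 2 * IZR k * PI - PI).
    assert (Hy : sin y = - sin (theta i t)).
    { unfold y. rewrite sin_minus, cos_PI, sin_PI, sin_sub_2kPI. ring. }
    assert (Hasin : asin (sin y) = y) by (apply asin_sin; unfold y; lra).
    rewrite Hy, asin_opp in Hasin. unfold y in Hasin. lra. }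
  apply (is_lim_plus' _ (fun _ => 2 * IZR k * PI)); [|apply is_lim_const].
  apply (is_lim_minus' (fun _ => PI)); [apply is_lim_const|].
  apply (is_lim_comp_continuity_pt _ asin); [apply sin_theta_lim, Hi|].
  apply derivable_continuous_pt, derivable_pt_asin, omega_ratio_in_asin_domain, Hi.
Qed.

(* The limit [cos = - sqrt (1 - x^2)] with [x^2 < mu (2 - mu)] lies strictly below [-1 + mu]. *)
Lemma cos_theta_sup_lt_below_band i : (i < N)%nat -> (forall t, 0 <= t -> cos (theta i t) < -1 + mu) ->
  exists c, c < -1 + mu /\ forall t, 0 <= t -> cos (theta i t) <= c.
Proof.
  intros Hi Hbelow. destruct (theta_lim_below_band i Hi Hbelow) as [k Hk].
  set (x := omega i / (kappa * Rinf)).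
  pose proof (omega_ratio_in_asin_domain i Hi) as Hx. fold x in Hx.
  assert (Hc := is_lim_comp_continuity_pt _ cos _ Hk (derivable_continuous_pt _ _ (derivable_pt_cos _))).
  set (cL := cos (PI - asin x + 2 * IZR k * PI)) in Hc.
  assert (HcL : cL < -1 + mu).
  { unfold cL. rewrite Rplus_comm, cos_2kPI_add, Rtrigo_facts.cos_pi_minus, cos_asin by lra.
    pose proof (omega_ratio_sqr_lt i Rinf Hi HRinf_ge) as Hx2.
    rewrite sin_floor_sqr in Hx2. fold x in Hx2.
    enough (1 - mu < sqrt (1 - x²)) by lra.
    rewrite <- (sqrt_square (1 - mu)) by lra. apply sqrt_lt_1; unfold Rsqr in *; simpl in Hx2; nra. }
  destruct (proj1 (is_lim_p_infty_eps _ _) Hc ((-1 + mu - cL) / 2)) as [M HM]; [lra|].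
  set (M' := Rmax M 0).
  destruct (continuity_ab_maj (fun t => cos (theta i t)) 0 M' (Rmax_r M 0)) as [tm [Htm Htm']].
  { intros t Ht; apply cos_theta_continuity; auto; lra. }
  exists (Rmax (cL + (-1 + mu - cL) / 2) (cos (theta i tm))). split.
  { apply Rmax_case_strong; intros; [lra | apply Hbelow; lra]. }
  intros t Ht. destruct (Rle_dec t M').
  - eapply Rle_trans; [apply Htm; lra | apply Rmax_r].
  - assert (HMt : M <= t) by (pose proof (Rmax_l M 0); unfold M' in *; lra).
    specialize (HM t HMt). apply Rabs_def2 in HM.
    eapply Rle_trans; [|apply Rmax_l]. unfold cL, x in *. lra.
Qed.

End Limits.

Lemma theta_asymptotics i : (i < N)%nat ->
  (exists L : R, is_lim (theta i) p_infty (Finite L)) /\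
  (exists a b : R, b - a < 2 * PI /\ forall t, 0 <= t -> a <= theta i t <= b) /\
  is_lim (fun t => Derive (theta i) t) p_infty (Finite 0).
Proof.
  intros Hi. destruct order_param_converges as [Rinf [HRinf HRinf_ge]].
  split; [|split; [apply theta_range_lt_2PI, Hi|]].
  - destruct (enters_band_or_stays_below i) as [[t0 [Ht0 Hc]] | Hnever].
    + destruct (theta_lim_in_band Rinf HRinf HRinf_ge i t0 Hi Ht0 Hc) as [k Hk]. eexists; exact Hk.
    + destruct (theta_lim_below_band Rinf HRinf HRinf_ge i Hi Hnever) as [k Hk]. eexists; exact Hk.
  - apply (is_lim_p_infty_ext (phase_vel i) _ _ 0); [|apply phase_vel_to_0, Hi].
    intros t Ht. symmetry. apply is_derive_unique, theta_derive; auto.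
Qed.

Lemma cos_theta_band_entry i t0 : (i < N)%nat -> 0 <= t0 -> cos (theta i t0) >= -1 + mu ->
  (forall t, t >= t0 -> cos (theta i t) >= -1 + mu) /\
  (forall t, t >= t0 + tau -> cos (theta i t) >= 1 - mu).
Proof.
  intros Hi Ht0 Hc. split; intros t Ht; apply Rle_ge.
  - apply (cos_theta_ge_persists i t0); auto; lra.
  - apply (cos_theta_top_after_tau i t0); auto; lra.
Qed.

Lemma theta_limit_branches : exists Rinf : R, is_lim Rt p_infty (Finite Rinf) /\
  forall i, (i < N)%nat ->
    let P := exists c : R, c < -1 + mu /\ forall t, 0 <= t -> cos (theta i t) <= c in
    (P -> exists (L : R) (k : Z), is_lim (theta i) p_infty (Finite L) /\
            L = PI - asin (omega i / (kappa * Rinf)) + 2 * IZR k * PI) /\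
    (~ P -> exists (L : R) (k : Z), is_lim (theta i) p_infty (Finite L) /\
            L = asin (omega i / (kappa * Rinf)) + 2 * IZR k * PI).
Proof.
  destruct order_param_converges as [Rinf [HRinf HRinf_ge]].
  exists Rinf. split; [exact HRinf|]. intros i Hi P. split.
  - intros [c [Hc Hcos]].
    destruct (theta_lim_below_band Rinf HRinf HRinf_ge i Hi) as [k Hk];
      [intros t Ht; pose proof (Hcos t Ht); lra|].
    eexists; exists k; split; [exact Hk | reflexivity].
  - intros HnP.
    destruct (enters_band_or_stays_below i) as [[t0 [Ht0 Hc]] | Hnever].
    + destruct (theta_lim_in_band Rinf HRinf HRinf_ge i t0 Hi Ht0 Hc) as [k Hk].
      eexists; exists k; split; [exact Hk | reflexivity].
    + exfalso. apply HnP, (cos_theta_sup_lt_below_band Rinf HRinf HRinf_ge i Hi Hnever).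
Qed.

End Winfree.

Lemma is_solution_derive N omega kappa theta0 theta : is_solution N omega kappa theta0 theta ->
  forall i t, (i < N)%nat -> 0 <= t ->
  is_derive (theta i) t (omega i - kappa * order_param N theta t * sin (theta i t)).
Proof.
  intros [_ Hd] i t Hi Ht.
  replace (kappa * order_param N theta t) with (kappa / INR N * sumN N (fun j => 1 + cos (theta j t)))
    by (unfold order_param, Rdiv; ring).
  apply Hd; auto.
Qed.

Theorem theorem2p1 (N : nat) (omega : nat -> R) (kappa : R)
  (theta0 : nat -> R) (theta : nat -> R -> R) (mu : R) :
  (1 <= N)%nat ->
  is_solution N omega kappa theta0 theta ->
  let Rt := order_param N theta in
  let R0 := Rt 0 in
  let W := Omega_inf N omega in
  0 < R0 ->
  0 < mu -> mu < Rmin R0 1 ->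
  kappa > W / ((R0 - mu) * sqrt (mu * (2 - mu))) ->
  let tau := PI / (kappa * (R0 - mu) * sqrt (mu * (2 - mu)) - W) in
  let lam := kappa * (R0 - mu) * (1 - mu) in
  (* (a) *)
  (forall t, 0 <= t -> Rt t >= R0 - mu) /\
  (* (b) *)
  (forall i, (i < N)%nat ->
     (exists L : R, is_lim (theta i) p_infty (Finite L)) /\
     (exists a b : R, b - a < 2 * PI /\
        forall t, 0 <= t -> a <= theta i t <= b) /\
     is_lim (fun t => Derive (theta i) t) p_infty (Finite 0)) /\
  (* (c) *)
  (forall i t0, (i < N)%nat -> 0 <= t0 -> cos (theta i t0) >= -1 + mu ->
     (forall t, t >= t0 -> cos (theta i t) >= -1 + mu) /\
     (forall t, t >= t0 + tau -> cos (theta i t) >= 1 - mu)) /\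
  (* (d) *)
  (exists Rinf : R, is_lim Rt p_infty (Finite Rinf) /\
     forall i, (i < N)%nat ->
       let P := exists c : R, c < -1 + mu /\
                  forall t, 0 <= t -> cos (theta i t) <= c in
       (P -> exists (L : R) (k : Z), is_lim (theta i) p_infty (Finite L) /\
               L = PI - asin (omega i / (kappa * Rinf)) + 2 * IZR k * PI) /\
       (~ P -> exists (L : R) (k : Z), is_lim (theta i) p_infty (Finite L) /\
               L = asin (omega i / (kappa * Rinf)) + 2 * IZR k * PI)) /\
  (* (e) *)
  (forall i j t0, (i < N)%nat -> (j < N)%nat -> 0 <= t0 ->
     cos (theta i t0) >= -1 + mu -> cos (theta j t0) >= -1 + mu ->
     (omega i > omega j ->
        exists k : Z,
          (forall t, t >= t0 + tau ->
             theta i t - theta j t + 2 * IZR k * PI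
               <= (omega i - omega j) / lam + PI * exp (- lam * (t - t0 - tau))) /\
          (forall t, t >= t0 + tau + PI / (omega i - omega j) ->
             theta i t - theta j t + 2 * IZR k * PI
               >= (omega i - omega j) / (2 * kappa)
                  - (omega i - omega j) / (2 * kappa)
                    * exp (- 2 * kappa * (t - t0 - tau - PI / (omega i - omega j))))) /\
     (omega i = omega j ->
        exists k : Z, forall t, t >= t0 + tau ->
          Rabs (theta i t - theta j t + 2 * IZR k * PI)
            <= PI * exp (- lam * (t - t0 - tau)))).
Proof.
  intros HN Hsol Rt R0 W _ Hmu Hmu_lt Hkappa tau lam.
  pose proof (is_solution_derive N omega kappa theta0 theta Hsol) as Htheta.
  assert (HmuR0 : mu < R0) by (pose proof (Rmin_l R0 1); lra).
  assert (Hmu1 : mu < 1) by (pose proof (Rmin_r R0 1); lra).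
  assert (Hcoupling : W < kappa * (R0 - mu) * sqrt (mu * (2 - mu))).
  { assert (Hpos : 0 < (R0 - mu) * sqrt (mu * (2 - mu)))
      by (apply Rmult_lt_0_compat; [lra | apply sqrt_lt_R0; nra]).
    apply (Rmult_lt_compat_r _ _ _ Hpos) in Hkappa. unfold Rdiv in Hkappa.
    rewrite Rmult_assoc, Rinv_l, Rmult_1_r in Hkappa by lra. lra. }
  split; [|split; [|split; [|split]]].
  - intros t Ht. apply Rle_ge. eapply order_param_ge; eassumption.
  - intros i Hi. eapply theta_asymptotics; eassumption.
  - intros i t0 Hi Ht0 Hc. eapply cos_theta_band_entry; eassumption.
  - eapply theta_limit_branches; eassumption.
  - intros i j t0 Hi Hj Ht0 Hci Hcj. eapply phase_gap_estimates; eassumption.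
Qed.
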